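(* Let $p>0$, $k>0$ and $q=p\,e^{-2k^2}$ with $0<pq<1$, let $\zeta\in\mathbb R$, $t\in\mathbb C$, $x\in\mathbb R$. (a) If $p\,e^{-2\zeta k^2}<1$, then $$E^{(\zeta+1/2)}_{p,q}\big(te^{-kx}\big)e^{-x^2/2}=\frac1{\sqrt{2\pi}}\int_{-\infty}^{\infty}e^{ixy-y^2/2}E^{(\zeta)}_{p,q}\big(te^{iky}\big)\,dy.$$ (b) If $p\,e^{-(2\zeta-1)k^2}<1$, then $$E^{(\zeta-1/2)}_{p,q}\big(te^{ikx}\big)e^{-x^2/2}=\frac1{\sqrt{2\pi}}\int_{-\infty}^{\infty}e^{ixy-y^2/2}E^{(\zeta)}_{p,q}\big(te^{ky}\big)\,dy.$$
   Context: $[p,q;p,q]_n=\prod_{l=1}^n(p^{-l}-q^l)$ ($=1$ for $n=0$). The $(p,q,\zeta)$-exponential is $E^{(\zeta)}_{p,q}(z)=\sum_{n\ge0}\big(\frac qp\big)^{\zeta n^2/2}\frac{z^n}{[p,q;p,q]_n}$ (the case $\mu=\nu=\zeta/2$ of $E^{\mu,\nu}_{p,q}(z)=\sum_n(q^\mu/p^\nu)^{n^2}z^n/[p,q;p,q]_n$). *)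

From Stdlib Require Import Reals ClassicalEpsilon.
Open Scope R_scope.

Definition Cplx : Type := (R * R)%type.
Definition RtoC (r : R) : Cplx := (r, 0).
Definition Cadd (z w : Cplx) : Cplx := (fst z + fst w, snd z + snd w).
Definition Cmul (z w : Cplx) : Cplx :=
  (fst z * fst w - snd z * snd w, fst z * snd w + snd z * fst w).
Fixpoint Cpow (z : Cplx) (n : nat) : Cplx :=
  match n with O => (1, 0) | S m => Cmul z (Cpow z m) end.
Definition Cexp (z : Cplx) : Cplx := (exp (fst z) * cos (snd z), exp (fst z) * sin (snd z)).

Fixpoint pqbr (p q : R) (n : nat) : R :=
  match n with
  | O => 1
  | S m => pqbr p q m * (/ p ^ (S m) - q ^ (S m))
  end.

Definition Ecoef (zeta p q : R) (n : nat) : R :=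
  Rpower (q / p) (zeta * INR n ^ 2 / 2) / pqbr p q n.

Fixpoint Epartial (zeta p q : R) (z : Cplx) (N : nat) : Cplx :=
  match N with
  | O => (0, 0)
  | S m => Cadd (Epartial zeta p q z m) (Cmul (RtoC (Ecoef zeta p q m)) (Cpow z m))
  end.

Definition Eseries_sum (zeta p q : R) (z : Cplx) (w : Cplx) : Prop :=
  Un_cv (fun N => fst (Epartial zeta p q z N)) (fst w) /\
  Un_cv (fun N => snd (Epartial zeta p q z N)) (snd w).

Definition Econv (zeta p q : R) (z : Cplx) : Prop := exists w, Eseries_sum zeta p q z w.

Definition Eexp (zeta p q : R) (z : Cplx) : Cplx :=
  epsilon (inhabits (0, 0)) (fun w => Eseries_sum zeta p q z w).

Definition improper_integral (f : R -> Cplx) (l : Cplx) : Prop :=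
  (forall a b, inhabited (Riemann_integrable (fun y => fst (f y)) a b) /\
               inhabited (Riemann_integrable (fun y => snd (f y)) a b)) /\
  (forall eps, eps > 0 -> exists M, forall a b
     (pr1 : Riemann_integrable (fun y => fst (f y)) a b)
     (pr2 : Riemann_integrable (fun y => snd (f y)) a b),
     a <= - M -> M <= b ->
     Rabs (RiemannInt pr1 - fst l) < eps /\ Rabs (RiemannInt pr2 - snd l) < eps).

(* Expand [E^(ζ)] into its power series [Σ c_n w^n], [c_n = (q/p)^(ζn²/2) / [p,q;p,q]_n]
   with [q/p = e^(-2k²)], and integrate termwise.  Against the kernel [e^(ixy - y²/2) / √(2π)]
   each term is a Gaussian integral [∫ e^(-y²/2 + αy + iβy) dy = √(2π) e^((α+iβ)²/2)], which
   multiplies [c_n^(ζ)] by [e^(∓n²k²/2)] and so yields [c_n^(ζ±1/2)] and the [n]-th term of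
   the right-hand side.  Sum and integral are exchanged thanks to a summable majorant:
   [[p,q;p,q]_n ≥ (1 - pq)^n p^(-n(n+1)/2)] makes [|c_n|] decay like [(√p e^(-ζk²))^(n²)], and in
   (b) the growth [e^(nky)] is absorbed by [nky ≤ y²/(4λ) + λk²n²] for a suitable [λ > 1/2].
   The Gaussian integral comes from [(∫_0^t e^(-u²/2))² + 2∫_0^1 e^(-t²(1+x²)/2)/(1+x²) = π/2],
   and its Fourier transform from a first-order differential equation in the frequency. *)

From Stdlib Require Import Reals Lra Lia ClassicalEpsilon FunctionalExtensionality.
From Coquelicot Require Import Rcomplements Hierarchy Continuity Derive RInt RInt_analysis AutoDerive.
Open Scope R_scope.

Ltac derive_tac := apply is_derive_Reals; auto_derive; try exact I; cbn [pow]; unfold Rdiv.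

Lemma continuity_continuous f x : continuity f -> continuous f x.
Proof. intro Hf; apply continuity_pt_filterlim, Hf. Qed.

Lemma continuity_ex_RInt f a b : continuity f -> ex_RInt f a b.
Proof.
  intro Hf; apply (@ex_RInt_continuous R_CompleteNormedModule).
  intros; apply continuity_continuous, Hf.
Qed.

Lemma RInt_ext_R (f g : R -> R) a b : (forall x, f x = g x) -> (RInt f a b : R) = RInt g a b.
Proof. intro H; apply RInt_ext; intros; apply H. Qed.

Lemma RInt_point_R (f : R -> R) a : (RInt f a a : R) = 0.
Proof. apply (@RInt_point R_CompleteNormedModule). Qed.

Lemma RInt_const_R c a b : (RInt (fun _ => c) a b : R) = c * (b - a).
Proof. rewrite RInt_const; apply Rmult_comm. Qed.

Lemma RInt_Chasles_cont f a b c : continuity f -> RInt f a b + RInt f b c = RInt f a c.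
Proof. intro Hf; apply (@RInt_Chasles R_CompleteNormedModule); apply continuity_ex_RInt, Hf. Qed.

Lemma RInt_swap_cont f a b : continuity f -> (RInt f a b : R) = - RInt f b a.
Proof.
  intro Hf; rewrite <- (@opp_RInt_swap R_CompleteNormedModule f b a) by apply continuity_ex_RInt, Hf.
  reflexivity.
Qed.

Lemma RInt_scal_cont f l a b : continuity f -> (RInt (fun x => l * f x) a b : R) = l * RInt f a b.
Proof. intro Hf; apply (@RInt_scal R_CompleteNormedModule f), continuity_ex_RInt, Hf. Qed.

Lemma RInt_plus_cont f g a b : continuity f -> continuity g ->
  (RInt (fun x => f x + g x) a b : R) = RInt f a b + RInt g a b.
Proof. intros Hf Hg; apply (@RInt_plus R_CompleteNormedModule f g); apply continuity_ex_RInt; assumption. Qed.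

Lemma RInt_minus_cont f g a b : continuity f -> continuity g ->
  (RInt (fun x => f x - g x) a b : R) = RInt f a b - RInt g a b.
Proof. intros Hf Hg; apply (@RInt_minus R_CompleteNormedModule f g); apply continuity_ex_RInt; assumption. Qed.

Lemma RInt_lin_cont f g l a b : continuity f -> continuity g ->
  (RInt (fun x => f x + l * g x) a b : R) = RInt f a b + l * RInt g a b.
Proof.
  intros Hf Hg. rewrite RInt_plus_cont, RInt_scal_cont; auto. apply continuity_scal, Hg.
Qed.

Lemma RInt_le_cont f g a b : continuity f -> continuity g -> a <= b ->
  (forall x, a <= x <= b -> f x <= g x) -> RInt f a b <= RInt g a b.
Proof.
  intros Hf Hg Hab H. apply RInt_le; try apply continuity_ex_RInt; auto.
  intros x Hx; apply H; lra.
Qed.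

Lemma abs_RInt_le_cont f g a b : continuity f -> continuity g -> a <= b ->
  (forall x, a <= x <= b -> Rabs (f x) <= g x) -> Rabs (RInt f a b) <= RInt g a b.
Proof.
  intros Hf Hg Hab H. eapply Rle_trans; [apply abs_RInt_le, continuity_ex_RInt; auto|].
  apply RInt_le_cont; auto.
  intro x; apply (continuity_pt_comp f Rabs); [apply Hf | apply Rcontinuity_abs].
Qed.

Lemma derivable_pt_lim_RInt f a x : continuity f ->
  derivable_pt_lim (fun u => RInt f a u) x (f x).
Proof.
  intro Hf. apply is_derive_Reals, (@is_derive_RInt R_NormedModule f _ a).
  - apply filter_forall; intro u. apply (@RInt_correct R_CompleteNormedModule), continuity_ex_RInt, Hf.
  - apply continuity_continuous, Hf.
Qed.

Lemma RInt_derivable_pt_lim F f a b : (forall x, derivable_pt_lim F x (f x)) -> continuity f ->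
  (RInt f a b : R) = F b - F a.
Proof.
  intros HF Hf. apply is_RInt_unique, (@is_RInt_derive R_CompleteNormedModule).
  - intros x _; apply is_derive_Reals, HF.
  - intros x _; apply continuity_continuous, Hf.
Qed.

Lemma RInt_comp_cont g phi phi' a b : continuity g -> (forall x, derivable_pt_lim phi x (phi' x)) ->
  continuity phi' -> (RInt (fun u => g (phi u) * phi' u) a b : R) = RInt g (phi a) (phi b).
Proof.
  intros Hg Hp Hp'. rewrite <- (@RInt_comp R_CompleteNormedModule g phi phi').
  - apply RInt_ext_R; intro; apply Rmult_comm.
  - intros; apply continuity_continuous, Hg.
  - intros x _; split; [apply is_derive_Reals, Hp | apply continuity_continuous, Hp'].
Qed.

Lemma derivable_pt_lim_0_const G a b : (forall x, derivable_pt_lim G x 0) -> G b = G a.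
Proof.
  intro H. assert (E := RInt_derivable_pt_lim G (fun _ => 0) a b H
    (continuity_const (fun _ => 0) (fun _ _ => eq_refl))).
  rewrite RInt_const_R in E; lra.
Qed.

Lemma derivable_pt_lim_shift f s d l :
  derivable_pt_lim f (s + d) l -> derivable_pt_lim (fun e => f (s + e)) d l.
Proof.
  intros H eps Heps. destruct (H eps Heps) as [del Hdel]. exists del. intros h Hh Hh'.
  replace (s + (d + h)) with (s + d + h) by ring. apply Hdel; auto.
Qed.

Lemma taylor2_remainder_le phi phi1 phi2 s d K :
  (forall u, derivable_pt_lim phi u (phi1 u)) -> (forall u, derivable_pt_lim phi1 u (phi2 u)) ->
  (forall u, s - 1 <= u <= s + 1 -> Rabs (phi2 u) <= K) -> Rabs d <= 1 ->
  Rabs (phi (s + d) - phi s - d * phi1 s) <= K * d ^ 2.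
Proof.
  intros H1 H2 HK Hd.
  assert (K0 : 0 <= K) by (eapply Rle_trans; [apply Rabs_pos | apply (HK s); lra]).
  assert (Hphi1 : forall e, Rabs e <= Rabs d -> Rabs (phi1 (s + e) - phi1 s) <= K * Rabs d).
  { intros e He. rewrite <- (Rplus_0_r s) at 2.
    eapply Rle_trans; [apply (bounded_variation (fun e => phi1 (s + e)) (fun e => phi2 (s + e)))|].
    - intros c Hc. rewrite !Rminus_0_r in Hc. split.
      + apply is_derive_Reals, derivable_pt_lim_shift, H2.
      + apply HK. assert (Hc1 : Rabs c <= 1) by lra. apply Rabs_le_between in Hc1. lra.
    - rewrite Rminus_0_r. apply Rmult_le_compat_l; auto. }
  pose (psi e := phi (s + e) - e * phi1 s).
  replace (phi (s + d) - phi s - d * phi1 s) with (psi d - psi 0)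
    by (unfold psi; rewrite (Rplus_0_r s); ring).
  eapply Rle_trans; [apply (bounded_variation psi (fun e => phi1 (s + e) - phi1 s) (K * Rabs d))|].
  - intros c Hc. rewrite !Rminus_0_r in Hc. split; [|apply Hphi1; auto].
    apply is_derive_Reals. replace (phi1 (s + c) - phi1 s) with (phi1 (s + c) - 1 * phi1 s) by ring.
    apply derivable_pt_lim_minus; [apply derivable_pt_lim_shift, H1|].
    apply (derivable_pt_lim_scal_right id), derivable_pt_lim_id.
  - rewrite Rminus_0_r, Rmult_assoc, <- Rabs_mult, Rabs_right by nra. right; ring.
Qed.

Lemma derivable_pt_lim_RInt_param (h g : R -> R -> R) a b s K : a <= b -> 0 <= K ->
  (forall s', continuity (h s')) -> (forall s', continuity (g s')) ->
  (forall d u, Rabs d <= 1 -> a <= u <= b -> Rabs (h (s + d) u - h s u - d * g s u) <= K * d ^ 2) ->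
  derivable_pt_lim (fun s' => RInt (h s') a b) s (RInt (g s) a b).
Proof.
  intros Hab HK Hh Hg HB eps Heps.
  set (c := K * (b - a)). assert (Hc : 0 <= c) by (unfold c; nra).
  assert (Hpos : 0 < Rmin 1 (eps / (c + 1))) by (apply Rmin_pos; [lra | apply Rdiv_lt_0_compat; lra]).
  exists (mkposreal _ Hpos). intros d Hd0 Hd. simpl in Hd.
  assert (Hd1 : Rabs d <= 1) by (eapply Rle_trans; [left; apply Hd | apply Rmin_l]).
  assert (Hd2 : Rabs d < eps / (c + 1)) by (eapply Rlt_le_trans; [apply Hd | apply Rmin_r]).
  assert (Hgd : continuity (fun u => d * g s u)) by apply continuity_scal, Hg.
  assert (Hhd : continuity (fun u => h (s + d) u - h s u)).
  { intro u; apply continuity_pt_minus; apply Hh. }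
  replace ((RInt (h (s + d)) a b - RInt (h s) a b) / d - RInt (g s) a b)
    with (RInt (fun u => h (s + d) u - h s u - d * g s u) a b / d)
    by (rewrite RInt_minus_cont, RInt_minus_cont, RInt_scal_cont by auto; field; auto).
  assert (B : Rabs (RInt (fun u => h (s + d) u - h s u - d * g s u) a b) <= c * Rabs d * Rabs d).
  { replace (c * Rabs d * Rabs d) with (K * d ^ 2 * (b - a))
      by (unfold c; rewrite <- pow2_abs; ring).
    rewrite <- RInt_const_R. apply abs_RInt_le_cont; auto.
    - intro u; apply continuity_pt_minus; [apply Hhd | apply Hgd].
    - intro; apply continuity_pt_const; intros ? ?; reflexivity. }
  assert (Ha : 0 < Rabs d) by (apply Rabs_pos_lt; auto).
  unfold Rdiv. rewrite Rabs_mult, Rabs_inv.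
  apply Rle_lt_trans with (c * Rabs d).
  - replace (c * Rabs d) with (c * Rabs d * Rabs d * / Rabs d) by (field; lra).
    apply Rmult_le_compat_r; auto. left; apply Rinv_0_lt_compat; auto.
  - replace eps with (eps / (c + 1) * (c + 1)) by (field; lra). nra.
Qed.

(** * The Gaussian integral *)

Definition gauss (u : R) := exp (- u ^ 2 / 2).

Lemma gauss_pos u : 0 < gauss u.
Proof. apply exp_pos. Qed.

Lemma gauss_opp u : gauss (- u) = gauss u.
Proof. unfold gauss; do 3 f_equal; ring. Qed.

Lemma continuity_gauss : continuity gauss.
Proof. unfold gauss; reg. Qed.

Lemma gauss_le_inv u : 0 < u -> gauss u <= / u.
Proof.
  intro Hu. unfold gauss. replace (- u ^ 2 / 2) with (- (u ^ 2 / 2)) by field.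
  rewrite exp_Ropp. apply Rinv_le_contravar; auto.
  pose proof (exp_ineq1_le (u ^ 2 / 2)). nra.
Qed.

Lemma sqr_mul_gauss_le u : u ^ 2 * gauss u <= 1.
Proof.
  unfold gauss. replace (- u ^ 2 / 2) with (- (u ^ 2 / 2)) by field. rewrite exp_Ropp.
  assert (Hv := exp_ineq1_le (u ^ 2 / 4)). pose proof (exp_pos (u ^ 2 / 4)).
  replace (exp (u ^ 2 / 2)) with (exp (u ^ 2 / 4) * exp (u ^ 2 / 4))
    by (rewrite <- exp_plus; f_equal; field).
  assert (Hsq : (1 + u ^ 2 / 4) ^ 2 <= exp (u ^ 2 / 4) * exp (u ^ 2 / 4))
    by (pose proof (pow2_ge_0 u); nra).
  apply Rmult_le_reg_r with (exp (u ^ 2 / 4) * exp (u ^ 2 / 4)); [nra|].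
  rewrite Rmult_assoc, Rinv_l by nra. pose proof (pow2_ge_0 (u ^ 2 / 4 - 1)). nra.
Qed.

Lemma exp_le_compat x y : x <= y -> exp x <= exp y.
Proof. intros [H | ->]; [left; apply exp_increasing | right]; auto. Qed.

(* The classical trick: [gauss_prim t ^ 2 + 2 gauss_aux t] has derivative 0 and equals
   [2 atan 1 = π/2] at [t = 0], while [gauss_aux t ≤ gauss t] vanishes as [t → ∞]. *)
Definition gauss_prim t := RInt gauss 0 t.
Definition gauss_aux_integrand (s x : R) := exp (- s ^ 2 * (1 + x ^ 2) / 2) * / (1 + x ^ 2).
Definition gauss_aux t := RInt (gauss_aux_integrand t) 0 1.

Lemma one_plus_sqr_pos x : 0 < 1 + x ^ 2.
Proof. nra. Qed.

Lemma continuity_inv_one_plus_sqr : continuity (fun x => / (1 + x ^ 2)).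
Proof. intro x; apply continuity_pt_inv; [reg | pose proof (one_plus_sqr_pos x); lra]. Qed.

Lemma continuity_gauss_aux_integrand s : continuity (gauss_aux_integrand s).
Proof.
  intro x. apply continuity_pt_mult; [reg | apply continuity_inv_one_plus_sqr].
Qed.

Lemma abs_pred_mul_exp_le v : 0 <= v -> Rabs (v - 1) * exp (- v / 2) <= 2.
Proof.
  intro Hv. pose proof (exp_ineq1_le (v / 2)). pose proof (exp_pos (v / 2)).
  replace (- v / 2) with (- (v / 2)) by field. rewrite exp_Ropp.
  apply Rmult_le_reg_r with (exp (v / 2)); auto. rewrite Rmult_assoc, Rinv_l by lra.
  unfold Rabs; destruct (Rcase_abs (v - 1)); lra.
Qed.

Lemma derivable_pt_lim_gauss_aux t :
  derivable_pt_lim gauss_aux t (- gauss t * gauss_prim t).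
Proof.
  replace (- gauss t * gauss_prim t)
    with (RInt (fun x => - t * exp (- t ^ 2 * (1 + x ^ 2) / 2)) 0 1).
  - apply (derivable_pt_lim_RInt_param gauss_aux_integrand
             (fun s x => - s * exp (- s ^ 2 * (1 + x ^ 2) / 2)) 0 1 t 2); try lra.
    + apply continuity_gauss_aux_integrand.
    + intro s; reg.
    + intros d u Hd _. pose proof (one_plus_sqr_pos u).
      apply (taylor2_remainder_le (fun s => gauss_aux_integrand s u)
        (fun s => - s * exp (- s ^ 2 * (1 + u ^ 2) / 2))
        (fun s => (s ^ 2 * (1 + u ^ 2) - 1) * exp (- s ^ 2 * (1 + u ^ 2) / 2))); auto.
      * intro s. unfold gauss_aux_integrand. derive_tac. field; simpl in *; lra.
      * intro s. derive_tac. field.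
      * intros s _. rewrite Rabs_mult, (Rabs_right (exp _)) by (left; apply exp_pos).
        replace (- s ^ 2 * (1 + u ^ 2) / 2) with (- (s ^ 2 * (1 + u ^ 2)) / 2) by field.
        apply abs_pred_mul_exp_le. nra.
  - unfold gauss_prim.
    replace (RInt gauss 0 t) with (RInt gauss (t * 0) (t * 1)) by (f_equal; ring).
    rewrite <- (RInt_comp_cont gauss (fun x => t * x) (fun _ => t)), <- RInt_scal_cont.
    + apply RInt_ext_R. intro x. unfold gauss.
      replace (- t ^ 2 * (1 + x ^ 2) / 2) with (- t ^ 2 / 2 + - (t * x) ^ 2 / 2) by field.
      rewrite exp_plus. ring.
    + unfold gauss; reg.
    + apply continuity_gauss.
    + intro x. derive_tac. ring.
    + apply continuity_const; intros ? ?; reflexivity.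
Qed.

Lemma gauss_prim_sqr_add_gauss_aux t : gauss_prim t ^ 2 + 2 * gauss_aux t = PI / 2.
Proof.
  rewrite (derivable_pt_lim_0_const (fun t => gauss_prim t ^ 2 + 2 * gauss_aux t) 0 t).
  - unfold gauss_prim, gauss_aux. rewrite RInt_point_R.
    rewrite (RInt_ext_R _ (fun x => / (1 + x ^ 2)))
      by (intro x; unfold gauss_aux_integrand; replace (- 0 ^ 2 * (1 + x ^ 2) / 2) with 0 by field;
          rewrite exp_0; ring).
    rewrite (RInt_derivable_pt_lim atan), atan_1, atan_0;
      [field | apply derivable_pt_lim_atan | apply continuity_inv_one_plus_sqr].
  - intro s. replace 0 with (2 * gauss_prim s * gauss s + 2 * (- gauss s * gauss_prim s)) by ring.
    apply derivable_pt_lim_plus.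
    + apply (derivable_pt_lim_comp gauss_prim (fun y => y ^ 2)).
      * apply derivable_pt_lim_RInt, continuity_gauss.
      * replace (2 * gauss_prim s) with (INR 2 * gauss_prim s ^ Nat.pred 2) by (simpl; ring).
        apply derivable_pt_lim_pow.
    + apply (derivable_pt_lim_scal gauss_aux), derivable_pt_lim_gauss_aux.
Qed.

Lemma gauss_aux_bounds t : 0 <= gauss_aux t <= gauss t.
Proof.
  unfold gauss_aux. split.
  - apply RInt_ge_0; [lra | apply continuity_ex_RInt, continuity_gauss_aux_integrand |].
    intros x _. unfold gauss_aux_integrand. left.
    apply Rmult_lt_0_compat; [apply exp_pos | apply Rinv_0_lt_compat, one_plus_sqr_pos].
  - apply Rle_trans with (RInt (fun _ => gauss t) 0 1); [|rewrite RInt_const_R; right; ring].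
    apply RInt_le_cont; try lra.
    + apply continuity_gauss_aux_integrand.
    + apply continuity_const; intros ? ?; reflexivity.
    + intros x _. unfold gauss_aux_integrand, gauss. pose proof (one_plus_sqr_pos x).
      rewrite <- (Rmult_1_r (exp (- t ^ 2 / 2))).
      apply Rmult_le_compat; [left; apply exp_pos | left; apply Rinv_0_lt_compat; lra | |].
      * apply exp_le_compat. pose proof (pow2_ge_0 t). pose proof (pow2_ge_0 x). nra.
      * rewrite <- Rinv_1. apply Rinv_le_contravar; [lra | pose proof (pow2_ge_0 x); lra].
Qed.

Lemma gauss_prim_nonneg t : 0 <= t -> 0 <= gauss_prim t.
Proof.
  intro Ht. apply RInt_ge_0; [lra | apply continuity_ex_RInt, continuity_gauss |].
  intros; left; apply gauss_pos.
Qed.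

Lemma RInt_opp_bounds f a b : continuity f -> (RInt (fun u => f (- u)) a b : R) = - RInt f (- a) (- b).
Proof.
  intro Hf. assert (Hfo : continuity (fun u => f (- u)))
    by (intro u; apply (continuity_pt_comp (fun u => - u) f); [reg | apply Hf]).
  rewrite <- (RInt_comp_cont f (fun u => - u) (fun _ => -1)); [| exact Hf | intro; derive_tac; ring | reg].
  rewrite (RInt_ext_R (fun u => f (- u) * -1) (fun u => -1 * f (- u))) by (intro; ring).
  rewrite RInt_scal_cont by exact Hfo. lra.
Qed.

Lemma gauss_prim_opp t : gauss_prim (- t) = - gauss_prim t.
Proof.
  unfold gauss_prim. assert (E := RInt_opp_bounds gauss 0 t continuity_gauss).
  rewrite (RInt_ext_R _ gauss), Ropp_0 in E by apply gauss_opp. lra.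
Qed.

Lemma sqrt_PI_2_pos : 0 < sqrt (PI / 2).
Proof. apply sqrt_lt_R0; pose proof PI_RGT_0; lra. Qed.

Lemma gauss_prim_approx t : 0 <= t ->
  Rabs (gauss_prim t - sqrt (PI / 2)) <= 2 * gauss t / sqrt (PI / 2).
Proof.
  intro Ht. pose proof (gauss_prim_sqr_add_gauss_aux t). pose proof (gauss_aux_bounds t).
  pose proof (gauss_prim_nonneg t Ht). pose proof sqrt_PI_2_pos as Hr.
  assert (Hrr : sqrt (PI / 2) * sqrt (PI / 2) = PI / 2) by (apply sqrt_sqrt; pose proof PI_RGT_0; lra).
  set (r := sqrt (PI / 2)) in *. set (A := gauss_prim t) in *.
  replace (A - r) with ((A ^ 2 - r * r) / (A + r)) by (field; lra).
  unfold Rdiv. rewrite Rabs_mult, Rabs_inv, (Rabs_right (A + r)) by lra.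
  apply Rmult_le_compat; [apply Rabs_pos | left; apply Rinv_0_lt_compat; lra | |].
  - apply Rabs_le. split; nra.
  - apply Rinv_le_contravar; lra.
Qed.

Lemma RInt_gauss_approx a b : a <= 0 -> 0 <= b ->
  Rabs (RInt gauss a b - sqrt (2 * PI)) <= 2 * (gauss a + gauss b) / sqrt (PI / 2).
Proof.
  intros Ha Hb.
  assert (E : sqrt (2 * PI) = 2 * sqrt (PI / 2)).
  { replace (2 * PI) with (2 ^ 2 * (PI / 2)) by field.
    rewrite sqrt_mult, sqrt_pow2; pose proof PI_RGT_0; lra. }
  rewrite <- (RInt_Chasles_cont gauss a 0 b), (RInt_swap_cont gauss a 0) by apply continuity_gauss.
  change (- RInt gauss 0 a + RInt gauss 0 b) with (- gauss_prim a + gauss_prim b).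
  rewrite <- (Ropp_involutive a) at 1. rewrite gauss_prim_opp, <- (gauss_opp a), E.
  pose proof (gauss_prim_approx (- a) ltac:(lra)). pose proof (gauss_prim_approx b Hb).
  pose proof sqrt_PI_2_pos.
  replace (- - gauss_prim (- a) + gauss_prim b - 2 * sqrt (PI / 2))
    with ((gauss_prim (- a) - sqrt (PI / 2)) + (gauss_prim b - sqrt (PI / 2))) by ring.
  eapply Rle_trans; [apply Rabs_triang|].
  replace (2 * (gauss (- a) + gauss b) / sqrt (PI / 2))
    with (2 * gauss (- a) / sqrt (PI / 2) + 2 * gauss b / sqrt (PI / 2)) by (field; lra).
  lra.
Qed.

Definition is_improper_RInt (f : R -> R) (L : R) : Prop :=
  forall eps, 0 < eps -> exists M, 0 <= M /\
    forall a b, a <= - M -> M <= b -> Rabs (RInt f a b - L) < eps.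

Lemma is_improper_RInt_ext f g L : (forall y, f y = g y) -> is_improper_RInt f L -> is_improper_RInt g L.
Proof. intro H. replace g with f; auto. apply functional_extensionality; auto. Qed.

Lemma is_improper_RInt_lin f g L1 L2 c1 c2 : continuity f -> continuity g ->
  is_improper_RInt f L1 -> is_improper_RInt g L2 ->
  is_improper_RInt (fun y => c1 * f y + c2 * g y) (c1 * L1 + c2 * L2).
Proof.
  intros Hf Hg H1 H2 eps Heps. pose proof (Rabs_pos c1). pose proof (Rabs_pos c2).
  set (e := eps / (Rabs c1 + Rabs c2 + 1)).
  assert (He : 0 < e) by (apply Rdiv_lt_0_compat; lra).
  destruct (H1 e He) as [M1 [HM1 B1]], (H2 e He) as [M2 [HM2 B2]].
  exists (Rmax M1 M2). split; [eapply Rle_trans; [apply HM1 | apply Rmax_l]|].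
  intros a b Ha Hb. pose proof (Rmax_l M1 M2). pose proof (Rmax_r M1 M2).
  specialize (B1 a b ltac:(lra) ltac:(lra)). specialize (B2 a b ltac:(lra) ltac:(lra)).
  rewrite RInt_plus_cont, !RInt_scal_cont by (try apply continuity_scal; assumption).
  replace (c1 * RInt f a b + c2 * RInt g a b - (c1 * L1 + c2 * L2))
    with (c1 * (RInt f a b - L1) + c2 * (RInt g a b - L2)) by ring.
  eapply Rle_lt_trans; [apply Rabs_triang|]. rewrite !Rabs_mult.
  apply Rle_lt_trans with (Rabs c1 * e + Rabs c2 * e).
  - apply Rplus_le_compat; apply Rmult_le_compat_l; lra.
  - replace eps with (e * (Rabs c1 + Rabs c2 + 1)) by (unfold e; field; lra). nra.
Qed.

Lemma is_improper_RInt_shift f L al : continuity f ->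
  is_improper_RInt f L -> is_improper_RInt (fun y => f (y - al)) L.
Proof.
  intros Hf H eps Heps. destruct (H eps Heps) as [M [HM B]].
  pose proof (Rabs_le_between al (Rabs al)) as [Hal _].
  specialize (Hal (Rle_refl _)).
  exists (M + Rabs al). split; [pose proof (Rabs_pos al); lra|]. intros a b Ha Hb.
  rewrite (RInt_ext_R _ (fun y => f (y - al) * 1)) by (intro; ring).
  rewrite (RInt_comp_cont f (fun y => y - al) (fun _ => 1)); auto.
  - apply B; lra.
  - intro; derive_tac; ring.
  - apply continuity_const; intros ? ?; reflexivity.
Qed.

Lemma is_improper_RInt_zero : is_improper_RInt (fun _ => 0) 0.
Proof.
  intros eps He. exists 0. split; [lra|]. intros.
  rewrite RInt_const_R, Rmult_0_l, Rminus_0_r, Rabs_R0; auto.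
Qed.

Lemma RInt_gauss_tail_right f M b : continuity f -> (forall u, Rabs (f u) <= gauss u) ->
  1 <= M -> M <= b -> Rabs (RInt f M b) <= gauss M.
Proof.
  intros Hf Hb HM HMb.
  apply Rle_trans with (RInt (fun u => u * gauss u) M b).
  - apply abs_RInt_le_cont; auto; [unfold gauss; reg|].
    intros u Hu. eapply Rle_trans; [apply Hb|]. pose proof (gauss_pos u). nra.
  - rewrite (RInt_derivable_pt_lim (fun u => - gauss u)); [pose proof (gauss_pos b); lra| |unfold gauss; reg].
    intro; unfold gauss; derive_tac; field.
Qed.

Lemma RInt_gauss_tail_left f M a : continuity f -> (forall u, Rabs (f u) <= gauss u) ->
  1 <= M -> a <= - M -> Rabs (RInt f a (- M)) <= gauss M.
Proof.
  intros Hf Hb HM HMa.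
  apply Rle_trans with (RInt (fun u => - u * gauss u) a (- M)).
  - apply abs_RInt_le_cont; auto; [unfold gauss; reg|].
    intros u Hu. eapply Rle_trans; [apply Hb|]. pose proof (gauss_pos u). nra.
  - rewrite (RInt_derivable_pt_lim gauss), gauss_opp; [pose proof (gauss_pos a); lra| |unfold gauss; reg].
    intro; unfold gauss; derive_tac; field.
Qed.

Lemma is_improper_RInt_sym f L : continuity f -> (forall u, Rabs (f u) <= gauss u) ->
  (forall eps, 0 < eps -> exists M0, forall M, M0 <= M -> Rabs (RInt f (- M) M - L) < eps) ->
  is_improper_RInt f L.
Proof.
  intros Hf Hb H eps Heps. destruct (H (eps / 3) ltac:(lra)) as [M0 HM0].
  set (M := Rmax M0 (Rmax 1 (3 / eps))).
  assert (H1 : 1 <= M) by (unfold M; eapply Rle_trans; [apply (Rmax_l 1 (3 / eps)) | apply Rmax_r]).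
  assert (H2 : 3 / eps <= M) by (unfold M; eapply Rle_trans; [apply (Rmax_r 1 (3 / eps)) | apply Rmax_r]).
  assert (HgM : gauss M <= eps / 3).
  { eapply Rle_trans; [apply gauss_le_inv; lra|].
    replace (eps / 3) with (/ (3 / eps)) by (field; lra).
    apply Rinv_le_contravar; auto. apply Rdiv_lt_0_compat; lra. }
  exists M. split; [lra|]. intros a b Ha Hb'.
  rewrite <- (RInt_Chasles_cont f a (- M) b Hf), <- (RInt_Chasles_cont f (- M) M b Hf).
  pose proof (RInt_gauss_tail_left f M a Hf Hb H1 Ha).
  pose proof (RInt_gauss_tail_right f M b Hf Hb H1 Hb').
  pose proof (HM0 M (Rmax_l _ _)).
  replace (RInt f a (- M) + (RInt f (- M) M + RInt f M b) - L)
    with (RInt f a (- M) + (RInt f (- M) M - L) + RInt f M b) by ring.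
  eapply Rle_lt_trans; [apply Rabs_triang|].
  eapply Rle_lt_trans; [apply Rplus_le_compat_r, Rabs_triang|]. lra.
Qed.

(** * Fourier transform of the Gaussian *)

Definition gauss_cos (be u : R) := gauss u * cos (be * u).
Definition gauss_sin (be u : R) := gauss u * sin (be * u).

Lemma continuity_gauss_cos be : continuity (gauss_cos be).
Proof. unfold gauss_cos, gauss; reg. Qed.

Lemma continuity_gauss_sin be : continuity (gauss_sin be).
Proof. unfold gauss_sin, gauss; reg. Qed.

Lemma abs_gauss_cos_le be u : Rabs (gauss_cos be u) <= gauss u.
Proof.
  unfold gauss_cos. rewrite Rabs_mult, (Rabs_right (gauss u)) by (left; apply gauss_pos).
  pose proof (gauss_pos u). pose proof (COS_bound (be * u)).
  assert (Rabs (cos (be * u)) <= 1) by (apply Rabs_le; lra). nra.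
Qed.

Lemma abs_gauss_sin_le be u : Rabs (gauss_sin be u) <= gauss u.
Proof.
  unfold gauss_sin. rewrite Rabs_mult, (Rabs_right (gauss u)) by (left; apply gauss_pos).
  pose proof (gauss_pos u). pose proof (SIN_bound (be * u)).
  assert (Rabs (sin (be * u)) <= 1) by (apply Rabs_le; lra). nra.
Qed.

Lemma RInt_gauss_sin_sym be M : RInt (gauss_sin be) (- M) M = 0.
Proof.
  assert (E := RInt_opp_bounds (gauss_sin be) (- M) M (continuity_gauss_sin be)).
  rewrite Ropp_involutive, (RInt_swap_cont _ M), Ropp_involutive in E by apply continuity_gauss_sin.
  rewrite (RInt_ext_R (fun u => gauss_sin be (- u)) (fun u => -1 * gauss_sin be u)),
    RInt_scal_cont in E.
  - lra.
  - apply continuity_gauss_sin.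
  - intro u. unfold gauss_sin. rewrite gauss_opp.
    replace (be * - u) with (- (be * u)) by ring. rewrite sin_neg. ring.
Qed.

Lemma derivable_pt_lim_RInt_gauss_cos M be : 0 <= M ->
  derivable_pt_lim (fun b => RInt (gauss_cos b) (- M) M) be
    (RInt (fun u => - (u * gauss_sin be u)) (- M) M).
Proof.
  intro HM. apply (derivable_pt_lim_RInt_param gauss_cos (fun b u => - (u * gauss_sin b u)) (- M) M be 1);
    try lra.
  - apply continuity_gauss_cos.
  - intro b; unfold gauss_sin, gauss; reg.
  - intros d u Hd _. pose proof (sqr_mul_gauss_le u). pose proof (gauss_pos u).
    apply (taylor2_remainder_le (fun b => gauss_cos b u) (fun b => - (u * gauss_sin b u))
             (fun b => - (u ^ 2 * gauss_cos b u))); auto.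
    + intro b. unfold gauss_cos, gauss_sin. derive_tac. ring.
    + intro b. unfold gauss_cos, gauss_sin. derive_tac. ring.
    + intros b _. rewrite Rabs_Ropp, Rabs_mult, Rabs_right by (apply Rle_ge, pow2_ge_0).
      pose proof (abs_gauss_cos_le b u). pose proof (pow2_ge_0 u).
      apply Rle_trans with (u ^ 2 * gauss u); [apply Rmult_le_compat_l|]; lra.
Qed.

(* Integration by parts against [u ↦ gauss u * sin (be u)]. *)
Lemma RInt_mul_gauss_sin M be :
  RInt (fun u => - (u * gauss_sin be u)) (- M) M =
  2 * gauss M * sin (be * M) - be * RInt (gauss_cos be) (- M) M.
Proof.
  assert (E : RInt (fun u => - (u * gauss_sin be u) + be * gauss_cos be u) (- M) M
              = gauss_sin be M - gauss_sin be (- M)).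
  { apply RInt_derivable_pt_lim.
    - intro u. unfold gauss_sin, gauss_cos, gauss. derive_tac. field.
    - intro u. unfold gauss_sin, gauss_cos, gauss. reg. }
  rewrite RInt_lin_cont in E by (unfold gauss_sin, gauss_cos, gauss; reg).
  unfold gauss_sin at 2 3 in E. rewrite gauss_opp in E.
  replace (be * - M) with (- (be * M)) in E by ring. rewrite sin_neg in E. lra.
Qed.

(* [exp (b²/2) ∫_{-M}^M gauss_cos b] has the small derivative [2 exp (b²/2) gauss M sin (bM)]. *)
Lemma RInt_gauss_cos_sub_RInt_gauss_le M be : 0 <= M ->
  Rabs (exp (be ^ 2 / 2) * RInt (gauss_cos be) (- M) M - RInt gauss (- M) M)
    <= 2 * exp (be ^ 2 / 2) * gauss M * Rabs be.
Proof.
  intro HM. set (D b := exp (b ^ 2 / 2) * RInt (gauss_cos b) (- M) M).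
  assert (HD : forall b, derivable_pt_lim D b (2 * exp (b ^ 2 / 2) * gauss M * sin (b * M))).
  { intro b. unfold D.
    replace (2 * exp (b ^ 2 / 2) * gauss M * sin (b * M))
      with (exp (b ^ 2 / 2) * b * RInt (gauss_cos b) (- M) M
            + exp (b ^ 2 / 2) * RInt (fun u => - (u * gauss_sin b u)) (- M) M)
      by (rewrite RInt_mul_gauss_sin; ring).
    apply (derivable_pt_lim_mult (fun b => exp (b ^ 2 / 2)) (fun b => RInt (gauss_cos b) (- M) M)).
    - derive_tac. field.
    - apply derivable_pt_lim_RInt_gauss_cos; lra. }
  replace (RInt gauss (- M) M) with (D 0)
    by (unfold D; replace (0 ^ 2 / 2) with 0 by field; rewrite exp_0, Rmult_1_l;
        apply RInt_ext_R; intro; unfold gauss_cos; rewrite Rmult_0_l, cos_0; ring).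
  change (exp (be ^ 2 / 2) * RInt (gauss_cos be) (- M) M) with (D be).
  replace (Rabs be) with (Rabs (be - 0)) by (rewrite Rminus_0_r; reflexivity).
  apply (bounded_variation D (fun c => 2 * exp (c ^ 2 / 2) * gauss M * sin (c * M))).
  intros c Hc. split; [apply is_derive_Reals, HD|].
  rewrite !Rminus_0_r in Hc. pose proof (SIN_bound (c * M)). pose proof (gauss_pos M).
  assert (exp (c ^ 2 / 2) <= exp (be ^ 2 / 2)).
  { apply exp_le_compat. rewrite <- (pow2_abs c), <- (pow2_abs be). pose proof (Rabs_pos c). nra. }
  pose proof (exp_pos (c ^ 2 / 2)).
  rewrite !Rabs_mult, (Rabs_right 2), (Rabs_right (exp _)), (Rabs_right (gauss M)) by lra.
  assert (Rabs (sin (c * M)) <= 1) by (apply Rabs_le; lra).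
  apply Rle_trans with (2 * exp (c ^ 2 / 2) * gauss M * 1); [apply Rmult_le_compat_l; nra | nra].
Qed.

Lemma RInt_gauss_cos_approx M be : 1 <= M ->
  Rabs (RInt (gauss_cos be) (- M) M - sqrt (2 * PI) * exp (- be ^ 2 / 2))
    <= gauss M * (2 * Rabs be + 4 / sqrt (PI / 2)).
Proof.
  intro HM. pose proof (RInt_gauss_cos_sub_RInt_gauss_le M be ltac:(lra)) as L.
  pose proof (RInt_gauss_approx (- M) M ltac:(lra) ltac:(lra)) as G. rewrite gauss_opp in G.
  set (C := RInt (gauss_cos be) (- M) M) in *. set (I0 := RInt gauss (- M) M) in *.
  assert (Ee : exp (be ^ 2 / 2) * exp (- be ^ 2 / 2) = 1)
    by (rewrite <- exp_plus, <- exp_0; f_equal; field).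
  pose proof (exp_pos (- be ^ 2 / 2)). pose proof (gauss_pos M). pose proof sqrt_PI_2_pos.
  assert (Hle1 : exp (- be ^ 2 / 2) <= 1) by (rewrite <- exp_0; apply exp_le_compat; nra).
  replace (C - sqrt (2 * PI) * exp (- be ^ 2 / 2))
    with (exp (- be ^ 2 / 2) * (exp (be ^ 2 / 2) * C - I0) + exp (- be ^ 2 / 2) * (I0 - sqrt (2 * PI)))
    by (transitivity ((exp (be ^ 2 / 2) * exp (- be ^ 2 / 2)) * C - exp (- be ^ 2 / 2) * sqrt (2 * PI));
        [ring | rewrite Ee; ring]).
  eapply Rle_trans; [apply Rabs_triang|].
  rewrite !Rabs_mult, (Rabs_right (exp (- be ^ 2 / 2))) by lra.
  replace (2 * (gauss M + gauss M) / sqrt (PI / 2)) with (gauss M * (4 / sqrt (PI / 2))) in G by (field; lra).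
  rewrite Rmult_plus_distr_l. apply Rplus_le_compat.
  - eapply Rle_trans; [apply Rmult_le_compat_l; [lra | apply L]|].
    replace (exp (- be ^ 2 / 2) * (2 * exp (be ^ 2 / 2) * gauss M * Rabs be))
      with ((exp (be ^ 2 / 2) * exp (- be ^ 2 / 2)) * (2 * gauss M * Rabs be)) by ring.
    rewrite Ee. lra.
  - rewrite <- (Rmult_1_l (gauss M * _)). apply Rmult_le_compat; try lra; apply Rabs_pos.
Qed.

Lemma is_improper_RInt_gauss_cos be :
  is_improper_RInt (gauss_cos be) (sqrt (2 * PI) * exp (- be ^ 2 / 2)).
Proof.
  apply is_improper_RInt_sym; [apply continuity_gauss_cos | apply abs_gauss_cos_le|].
  intros eps Heps. pose proof sqrt_PI_2_pos. set (K := 2 * Rabs be + 4 / sqrt (PI / 2)).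
  assert (HK : 0 < K) by (unfold K; pose proof (Rabs_pos be); assert (0 < 4 / sqrt (PI / 2))
    by (apply Rdiv_lt_0_compat; lra); lra).
  exists (1 + K / eps). intros M HM.
  assert (HKe : 0 < K / eps) by (apply Rdiv_lt_0_compat; lra).
  eapply Rle_lt_trans; [apply RInt_gauss_cos_approx; lra|]. fold K.
  eapply Rle_lt_trans; [apply Rmult_le_compat_r; [lra | apply gauss_le_inv; lra]|].
  apply Rmult_lt_reg_l with M; [lra|]. rewrite <- Rmult_assoc, Rinv_r, Rmult_1_l by lra.
  replace K with (K / eps * eps) at 1 by (field; lra). nra.
Qed.

Lemma is_improper_RInt_gauss_sin be : is_improper_RInt (gauss_sin be) 0.
Proof.
  apply is_improper_RInt_sym; [apply continuity_gauss_sin | apply abs_gauss_sin_le|].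
  intros eps Heps. exists 0. intros M _. rewrite RInt_gauss_sin_sym, Rminus_0_r, Rabs_R0; auto.
Qed.

Lemma exp_gauss_shift al y : exp (- y ^ 2 / 2 + al * y) = exp (al ^ 2 / 2) * gauss (y - al).
Proof. unfold gauss. rewrite <- exp_plus. f_equal. field. Qed.

Lemma continuity_shift f al : continuity f -> continuity (fun y => f (y - al)).
Proof. intros H x. apply (continuity_pt_comp (fun y => y - al) f); [reg | apply H]. Qed.

Lemma is_improper_RInt_gauss_exp_cos al be :
  is_improper_RInt (fun y => exp (- y ^ 2 / 2 + al * y) * cos (be * y))
    (sqrt (2 * PI) * exp ((al ^ 2 - be ^ 2) / 2) * cos (al * be)).
Proof.
  apply (is_improper_RInt_ext (fun y => (exp (al ^ 2 / 2) * cos (al * be)) * gauss_cos be (y - al)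
                        + (- (exp (al ^ 2 / 2) * sin (al * be))) * gauss_sin be (y - al))).
  - intro y. unfold gauss_cos, gauss_sin. rewrite exp_gauss_shift.
    replace (be * y) with (be * (y - al) + al * be) by ring. rewrite cos_plus. ring.
  - replace (sqrt (2 * PI) * exp ((al ^ 2 - be ^ 2) / 2) * cos (al * be))
      with (exp (al ^ 2 / 2) * cos (al * be) * (sqrt (2 * PI) * exp (- be ^ 2 / 2))
            + - (exp (al ^ 2 / 2) * sin (al * be)) * 0)
      by (replace ((al ^ 2 - be ^ 2) / 2) with (al ^ 2 / 2 + - be ^ 2 / 2) by field;
          rewrite exp_plus; ring).
    apply is_improper_RInt_lin; try apply continuity_shift;
      try apply is_improper_RInt_shift;
      auto using continuity_gauss_cos, continuity_gauss_sin,
        is_improper_RInt_gauss_cos, is_improper_RInt_gauss_sin.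
Qed.

Lemma is_improper_RInt_gauss_exp_sin al be :
  is_improper_RInt (fun y => exp (- y ^ 2 / 2 + al * y) * sin (be * y))
    (sqrt (2 * PI) * exp ((al ^ 2 - be ^ 2) / 2) * sin (al * be)).
Proof.
  apply (is_improper_RInt_ext (fun y => (exp (al ^ 2 / 2) * sin (al * be)) * gauss_cos be (y - al)
                        + (exp (al ^ 2 / 2) * cos (al * be)) * gauss_sin be (y - al))).
  - intro y. unfold gauss_cos, gauss_sin. rewrite exp_gauss_shift.
    replace (be * y) with (be * (y - al) + al * be) by ring. rewrite sin_plus. ring.
  - replace (sqrt (2 * PI) * exp ((al ^ 2 - be ^ 2) / 2) * sin (al * be))
      with (exp (al ^ 2 / 2) * sin (al * be) * (sqrt (2 * PI) * exp (- be ^ 2 / 2))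
            + exp (al ^ 2 / 2) * cos (al * be) * 0)
      by (replace ((al ^ 2 - be ^ 2) / 2) with (al ^ 2 / 2 + - be ^ 2 / 2) by field;
          rewrite exp_plus; ring).
    apply is_improper_RInt_lin; try apply continuity_shift;
      try apply is_improper_RInt_shift;
      auto using continuity_gauss_cos, continuity_gauss_sin,
        is_improper_RInt_gauss_cos, is_improper_RInt_gauss_sin.
Qed.

Lemma Cplx_eq (a b : Cplx) : fst a = fst b -> snd a = snd b -> a = b.
Proof. destruct a, b; simpl; intros -> ->; reflexivity. Qed.

Ltac Cplx_ring := apply Cplx_eq; unfold Cmul, Cadd, RtoC, Cexp; simpl; ring.

Lemma Cmul_assoc a b c : Cmul a (Cmul b c) = Cmul (Cmul a b) c.
Proof. Cplx_ring. Qed.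

Lemma Cmul_comm a b : Cmul a b = Cmul b a.
Proof. Cplx_ring. Qed.

Lemma Cexp_add a b c d : Cmul (Cexp (a, b)) (Cexp (c, d)) = Cexp (a + c, b + d).
Proof. apply Cplx_eq; unfold Cmul, Cexp; simpl; rewrite exp_plus, ?cos_plus, ?sin_plus; ring. Qed.

Lemma Cpow_Cmul z w n : Cpow (Cmul z w) n = Cmul (Cpow z n) (Cpow w n).
Proof.
  induction n as [|n IH]; simpl; [Cplx_ring|]. rewrite IH, !Cmul_assoc. f_equal.
  rewrite <- !Cmul_assoc. f_equal. apply Cmul_comm.
Qed.

Lemma Cpow_Cexp a b n : Cpow (Cexp (a, b)) n = Cexp (INR n * a, INR n * b).
Proof.
  induction n as [|n IH]; simpl Cpow.
  - apply Cplx_eq; unfold Cexp; simpl; rewrite !Rmult_0_l, exp_0, ?cos_0, ?sin_0; ring.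
  - rewrite IH, Cexp_add, S_INR. f_equal; f_equal; ring.
Qed.

Lemma RtoC_exp c : RtoC (exp c) = Cexp (c, 0).
Proof. apply Cplx_eq; unfold RtoC, Cexp; simpl; rewrite ?cos_0, ?sin_0; ring. Qed.

Definition is_improper_CInt (F : R -> Cplx) (L : Cplx) : Prop :=
  continuity (fun y => fst (F y)) /\ continuity (fun y => snd (F y)) /\
  is_improper_RInt (fun y => fst (F y)) (fst L) /\ is_improper_RInt (fun y => snd (F y)) (snd L).

Lemma is_improper_CInt_ext F G L L' : (forall y, F y = G y) -> L = L' ->
  is_improper_CInt F L -> is_improper_CInt G L'.
Proof. intros H <-. replace G with F; auto. apply functional_extensionality; auto. Qed.

Lemma is_improper_CInt_zero : is_improper_CInt (fun _ => (0, 0)) (0, 0).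
Proof.
  repeat split; simpl; try apply is_improper_RInt_zero;
    apply continuity_const; intros ? ?; reflexivity.
Qed.

Lemma is_improper_CInt_add F G L1 L2 : is_improper_CInt F L1 -> is_improper_CInt G L2 ->
  is_improper_CInt (fun y => Cadd (F y) (G y)) (Cadd L1 L2).
Proof.
  intros [c1 [c2 [i1 i2]]] [d1 [d2 [j1 j2]]]. unfold is_improper_CInt, Cadd; simpl.
  repeat split; try (apply continuity_plus; assumption).
  - apply (is_improper_RInt_ext (fun y => 1 * fst (F y) + 1 * fst (G y))); [intro; ring|].
    replace (fst L1 + fst L2) with (1 * fst L1 + 1 * fst L2) by ring.
    apply is_improper_RInt_lin; assumption.
  - apply (is_improper_RInt_ext (fun y => 1 * snd (F y) + 1 * snd (G y))); [intro; ring|].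
    replace (snd L1 + snd L2) with (1 * snd L1 + 1 * snd L2) by ring.
    apply is_improper_RInt_lin; assumption.
Qed.

Lemma is_improper_CInt_gauss_exp K al be :
  is_improper_CInt (fun y => Cmul K (Cexp (- y ^ 2 / 2 + al * y, be * y)))
    (Cmul K (Cmul (RtoC (sqrt (2 * PI))) (Cexp ((al ^ 2 - be ^ 2) / 2, al * be)))).
Proof.
  destruct K as [k1 k2]. unfold is_improper_CInt, Cmul, Cexp, RtoC; cbn [fst snd].
  repeat split; try reg.
  - apply (is_improper_RInt_ext (fun y => k1 * (exp (- y ^ 2 / 2 + al * y) * cos (be * y))
                                  + (- k2) * (exp (- y ^ 2 / 2 + al * y) * sin (be * y))));
      [intro; ring|].
    replace (k1 * (sqrt (2 * PI) * (exp ((al ^ 2 - be ^ 2) / 2) * cos (al * be)) - 0 * (exp ((al ^ 2 - be ^ 2) / 2) * sin (al * be))) -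
             k2 * (sqrt (2 * PI) * (exp ((al ^ 2 - be ^ 2) / 2) * sin (al * be)) + 0 * (exp ((al ^ 2 - be ^ 2) / 2) * cos (al * be))))
      with (k1 * (sqrt (2 * PI) * exp ((al ^ 2 - be ^ 2) / 2) * cos (al * be))
            + - k2 * (sqrt (2 * PI) * exp ((al ^ 2 - be ^ 2) / 2) * sin (al * be))) by ring.
    apply is_improper_RInt_lin; try reg;
      auto using is_improper_RInt_gauss_exp_cos, is_improper_RInt_gauss_exp_sin.
  - apply (is_improper_RInt_ext (fun y => k1 * (exp (- y ^ 2 / 2 + al * y) * sin (be * y))
                                  + k2 * (exp (- y ^ 2 / 2 + al * y) * cos (be * y))));
      [intro; ring|].
    replace (k1 * (sqrt (2 * PI) * (exp ((al ^ 2 - be ^ 2) / 2) * sin (al * be)) + 0 * (exp ((al ^ 2 - be ^ 2) / 2) * cos (al * be))) +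
             k2 * (sqrt (2 * PI) * (exp ((al ^ 2 - be ^ 2) / 2) * cos (al * be)) - 0 * (exp ((al ^ 2 - be ^ 2) / 2) * sin (al * be))))
      with (k1 * (sqrt (2 * PI) * exp ((al ^ 2 - be ^ 2) / 2) * sin (al * be))
            + k2 * (sqrt (2 * PI) * exp ((al ^ 2 - be ^ 2) / 2) * cos (al * be))) by ring.
    apply is_improper_RInt_lin; try reg;
      auto using is_improper_RInt_gauss_exp_cos, is_improper_RInt_gauss_exp_sin.
Qed.

Lemma is_improper_CInt_improper_integral F L : is_improper_CInt F L -> improper_integral F L.
Proof.
  intros [c1 [c2 [i1 i2]]]. split.
  - intros a b. split; constructor; apply ex_RInt_Reals_0, continuity_ex_RInt; assumption.
  - intros eps Heps. destruct (i1 eps Heps) as [M1 [_ B1]], (i2 eps Heps) as [M2 [_ B2]].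
    exists (Rmax M1 M2). intros a b pr1 pr2 Ha Hb.
    rewrite <- (RInt_Reals _ _ _ pr1), <- (RInt_Reals _ _ _ pr2).
    pose proof (Rmax_l M1 M2). pose proof (Rmax_r M1 M2).
    split; [apply B1 | apply B2]; lra.
Qed.

Lemma continuity_unif_limit f (g : nat -> R -> R) e : (forall N, continuity (g N)) -> Un_cv e 0 ->
  (forall N y, Rabs (f y - g N y) <= e N) -> continuity f.
Proof.
  intros Hg He Hb x eps Heps.
  destruct (He (eps / 3) ltac:(lra)) as [N HN]. specialize (HN N (le_n N)).
  unfold R_dist in HN. rewrite Rminus_0_r in HN.
  destruct (Hg N x (eps / 3) ltac:(lra)) as [d [Hd Hy]].
  exists d. split; auto. intros y Hyx. specialize (Hy y Hyx). simpl in *; unfold R_dist in *.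
  pose proof (Hb N y). pose proof (Hb N x) as Hx. pose proof (Rle_abs (e N)).
  rewrite Rabs_minus_sym in Hx.
  replace (f y - f x) with ((f y - g N y) + (g N y - g N x) + (g N x - f x)) by ring.
  pose proof (Rabs_triang (f y - g N y + (g N y - g N x)) (g N x - f x)).
  pose proof (Rabs_triang (f y - g N y) (g N y - g N x)). lra.
Qed.

Lemma RInt_inv_one_plus_sqr_le a b : a <= b -> RInt (fun y => / (1 + y ^ 2)) a b <= PI.
Proof.
  intro Hab. rewrite (RInt_derivable_pt_lim atan);
    [| apply derivable_pt_lim_atan | apply continuity_inv_one_plus_sqr].
  pose proof (atan_bound a). pose proof (atan_bound b). lra.
Qed.

Lemma is_improper_RInt_approx f (g : nat -> R -> R) Ls L e : continuity f ->
  (forall N, continuity (g N)) -> (forall N, is_improper_RInt (g N) (Ls N)) ->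
  Un_cv Ls L -> Un_cv e 0 ->
  (forall N y, Rabs (f y - g N y) <= e N * / (1 + y ^ 2)) -> is_improper_RInt f L.
Proof.
  intros Hf Hg HI HL He Hb eps Heps. pose proof PI_RGT_0.
  destruct (He (eps / (3 * PI)) ltac:(apply Rdiv_lt_0_compat; lra)) as [N1 HN1].
  destruct (HL (eps / 3) ltac:(lra)) as [N2 HN2].
  set (N := (N1 + N2)%nat). specialize (HN1 N ltac:(unfold N; lia)). specialize (HN2 N ltac:(unfold N; lia)).
  unfold R_dist in HN1, HN2. rewrite Rminus_0_r in HN1.
  destruct (HI N (eps / 3) ltac:(lra)) as [M [HM HB]].
  exists M. split; auto. intros a b Ha Hb'. specialize (HB a b Ha Hb').
  assert (Cd : continuity (fun y => f y - g N y)) by (apply continuity_minus; auto).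
  assert (B1 : Rabs (RInt (fun y => f y - g N y) a b) <= Rabs (e N) * PI).
  { eapply Rle_trans; [apply (abs_RInt_le_cont _ (fun y => Rabs (e N) * / (1 + y ^ 2)))|].
    - exact Cd.
    - apply continuity_scal, continuity_inv_one_plus_sqr.
    - lra.
    - intros y _. eapply Rle_trans; [apply Hb|].
      apply Rmult_le_compat_r; [left; apply Rinv_0_lt_compat, one_plus_sqr_pos | apply Rle_abs].
    - rewrite RInt_scal_cont by apply continuity_inv_one_plus_sqr.
      apply Rmult_le_compat_l; [apply Rabs_pos | apply RInt_inv_one_plus_sqr_le; lra]. }
  assert (Rabs (e N) * PI < eps / 3).
  { apply Rlt_le_trans with (eps / (3 * PI) * PI); [apply Rmult_lt_compat_r; auto | right; field; lra]. }
  replace (RInt f a b - L) with (RInt (fun y => f y - g N y) a b + (RInt (g N) a b - Ls N) + (Ls N - L))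
    by (rewrite RInt_minus_cont; auto; ring).
  pose proof (Rabs_triang (RInt (fun y => f y - g N y) a b + (RInt (g N) a b - Ls N)) (Ls N - L)).
  pose proof (Rabs_triang (RInt (fun y => f y - g N y) a b) (RInt (g N) a b - Ls N)). lra.
Qed.

Lemma is_improper_CInt_approx (F : R -> Cplx) (g : nat -> R -> Cplx) (Ls : nat -> Cplx) L e :
  (forall N, is_improper_CInt (g N) (Ls N)) ->
  Un_cv (fun N => fst (Ls N)) (fst L) -> Un_cv (fun N => snd (Ls N)) (snd L) -> Un_cv e 0 ->
  (forall N y, Rabs (fst (F y) - fst (g N y)) + Rabs (snd (F y) - snd (g N y)) <= e N * / (1 + y ^ 2)) ->
  is_improper_CInt F L.
Proof.
  intros HI H1 H2 He Hb.
  assert (Hw : forall N y, 0 <= e N * / (1 + y ^ 2) <= e N).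
  { intros N y. pose proof (Hb N y). pose proof (Rabs_pos (fst (F y) - fst (g N y))).
    pose proof (Rabs_pos (snd (F y) - snd (g N y))). pose proof (one_plus_sqr_pos y).
    assert (0 < / (1 + y ^ 2) <= 1).
    { split; [apply Rinv_0_lt_compat; lra|].
      rewrite <- Rinv_1. apply Rinv_le_contravar; [lra | pose proof (pow2_ge_0 y); lra]. }
    assert (0 <= e N) by nra. nra. }
  assert (Hb1 : forall N y, Rabs (fst (F y) - fst (g N y)) <= e N * / (1 + y ^ 2))
    by (intros N y; pose proof (Hb N y); pose proof (Rabs_pos (snd (F y) - snd (g N y))); lra).
  assert (Hb2 : forall N y, Rabs (snd (F y) - snd (g N y)) <= e N * / (1 + y ^ 2))
    by (intros N y; pose proof (Hb N y); pose proof (Rabs_pos (fst (F y) - fst (g N y))); lra).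
  assert (C1 : continuity (fun y => fst (F y))).
  { apply (continuity_unif_limit _ (fun N y => fst (g N y)) e); auto; [intro N; apply (HI N)|].
    intros N y; eapply Rle_trans; [apply Hb1 | apply Hw]. }
  assert (C2 : continuity (fun y => snd (F y))).
  { apply (continuity_unif_limit _ (fun N y => snd (g N y)) e); auto; [intro N; apply (HI N)|].
    intros N y; eapply Rle_trans; [apply Hb2 | apply Hw]. }
  repeat split; auto.
  - apply (is_improper_RInt_approx _ (fun N y => fst (g N y)) (fun N => fst (Ls N)) _ e); auto;
      intro N; apply (HI N).
  - apply (is_improper_RInt_approx _ (fun N y => snd (g N y)) (fun N => snd (Ls N)) _ e); auto;
      intro N; apply (HI N).
Qed.

Definition Cnorm1 (z : Cplx) := Rabs (fst z) + Rabs (snd z).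

Lemma Cnorm1_ge_0 z : 0 <= Cnorm1 z.
Proof. unfold Cnorm1; pose proof (Rabs_pos (fst z)); pose proof (Rabs_pos (snd z)); lra. Qed.

Lemma Cnorm1_Cmul_le z w : Cnorm1 (Cmul z w) <= Cnorm1 z * Cnorm1 w.
Proof.
  destruct z as [a b], w as [c d]. unfold Cnorm1, Cmul; simpl.
  eapply Rle_trans; [apply Rplus_le_compat; apply Rabs_triang|].
  rewrite Rabs_Ropp, !Rabs_mult.
  pose proof (Rabs_pos a); pose proof (Rabs_pos b); pose proof (Rabs_pos c); pose proof (Rabs_pos d). nra.
Qed.

Lemma Cnorm1_Cpow_le z n : Cnorm1 (Cpow z n) <= Cnorm1 z ^ n.
Proof.
  induction n as [|n IH]; simpl.
  - unfold Cnorm1; simpl. rewrite Rabs_R1, Rabs_R0; lra.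
  - eapply Rle_trans; [apply Cnorm1_Cmul_le|]. apply Rmult_le_compat_l; [apply Cnorm1_ge_0 | exact IH].
Qed.

Lemma Cnorm1_RtoC r : Cnorm1 (RtoC r) = Rabs r.
Proof. unfold Cnorm1, RtoC; simpl. rewrite Rabs_R0; ring. Qed.

Lemma Cnorm1_Cexp_le a b : Cnorm1 (Cexp (a, b)) <= 2 * exp a.
Proof.
  unfold Cnorm1, Cexp; simpl. rewrite !Rabs_mult, Rabs_right by (left; apply exp_pos).
  pose proof (COS_bound b); pose proof (SIN_bound b). pose proof (exp_pos a).
  assert (Rabs (cos b) <= 1) by (apply Rabs_le; lra). assert (Rabs (sin b) <= 1) by (apply Rabs_le; lra).
  nra.
Qed.

Fixpoint psum (f : nat -> R) (N : nat) : R :=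
  match N with O => 0 | S m => psum f m + f m end.

Lemma psum_S f N : psum f (S N) = sum_f_R0 f N.
Proof. induction N as [|N IH]; simpl in *; [ring | rewrite <- IH; ring]. Qed.

Lemma Un_cv_psum f l : Un_cv (sum_f_R0 f) l -> Un_cv (psum f) l.
Proof.
  intros H eps He. destruct (H eps He) as [N HN]. exists (S N). intros [|n] Hn; [lia|].
  rewrite psum_S. apply HN. lia.
Qed.

Lemma psum_scal c f N : psum (fun n => c * f n) N = c * psum f N.
Proof. induction N as [|N IH]; simpl; [ring | rewrite IH; ring]. Qed.

Lemma psum_le_lim b B N : (forall n, 0 <= b n) -> Un_cv (psum b) B -> psum b N <= B.
Proof.
  intros H HB. assert (Hmono : forall k, psum b N <= psum b (N + k)).
  { induction k as [|k IH]; [rewrite Nat.add_0_r; lra|].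
    rewrite Nat.add_succ_r. simpl. specialize (H (N + k)%nat). lra. }
  apply Rnot_lt_le. intro Hlt.
  destruct (HB (psum b N - B) ltac:(lra)) as [M HM]. specialize (HM (N + M)%nat ltac:(lia)).
  unfold R_dist in HM. specialize (Hmono M). apply Rabs_def2 in HM. lra.
Qed.

Lemma psum_diff_le (u1 u2 b : nat -> R) N k : (forall n, Rabs (u1 n) + Rabs (u2 n) <= b n) ->
  Rabs (psum u1 (N + k) - psum u1 N) + Rabs (psum u2 (N + k) - psum u2 N)
    <= psum b (N + k) - psum b N.
Proof.
  intro H. induction k as [|k IH]; [rewrite Nat.add_0_r, !Rminus_diag, Rabs_R0; lra|].
  rewrite Nat.add_succ_r. simpl.
  pose proof (Rabs_triang (psum u1 (N + k) - psum u1 N) (u1 (N + k)%nat)).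
  pose proof (Rabs_triang (psum u2 (N + k) - psum u2 N) (u2 (N + k)%nat)).
  replace (psum u1 (N + k) + u1 (N + k)%nat - psum u1 N)
    with (psum u1 (N + k) - psum u1 N + u1 (N + k)%nat) by ring.
  replace (psum u2 (N + k) + u2 (N + k)%nat - psum u2 N)
    with (psum u2 (N + k) - psum u2 N + u2 (N + k)%nat) by ring.
  specialize (H (N + k)%nat). lra.
Qed.

Lemma Cauchy_crit_psum (u b : nat -> R) : (forall n, Rabs (u n) <= b n) ->
  Cauchy_crit (psum b) -> Cauchy_crit (psum u).
Proof.
  intros H Hc eps He. destruct (Hc eps He) as [N HN]. exists N.
  assert (G : forall n m, (N <= n)%nat -> (n <= m)%nat -> Rabs (psum u m - psum u n) < eps).
  { intros n m Hn Hm. replace m with (n + (m - n))%nat by lia.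
    assert (D := psum_diff_le u (fun _ => 0) b n (m - n)
      ltac:(intro; cbv beta; rewrite Rabs_R0, Rplus_0_r; apply H)).
    assert (Hz : forall K, psum (fun _ => 0) K = 0) by (induction K; simpl; lra).
    rewrite !Hz, Rminus_diag, Rabs_R0, Rplus_0_r in D.
    specialize (HN (n + (m - n))%nat n ltac:(lia) ltac:(lia)). unfold R_dist in HN.
    pose proof (Rle_abs (psum b (n + (m - n)) - psum b n)). lra. }
  intros n m Hn Hm. unfold R_dist. destruct (Nat.le_ge_cases n m).
  - rewrite Rabs_minus_sym. apply G; auto.
  - apply G; auto.
Qed.

Lemma psum_tail_le (u1 u2 b : nat -> R) B : (forall n, Rabs (u1 n) + Rabs (u2 n) <= b n) ->
  Un_cv (psum b) B ->
  exists w1 w2, Un_cv (psum u1) w1 /\ Un_cv (psum u2) w2 /\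
    forall N, Rabs (w1 - psum u1 N) + Rabs (w2 - psum u2 N) <= B - psum b N.
Proof.
  intros H HB.
  assert (Hc : Cauchy_crit (psum b)) by (apply CV_Cauchy; exists B; auto).
  assert (H1 : forall n, Rabs (u1 n) <= b n) by (intro n; pose proof (H n); pose proof (Rabs_pos (u2 n)); lra).
  assert (H2 : forall n, Rabs (u2 n) <= b n) by (intro n; pose proof (H n); pose proof (Rabs_pos (u1 n)); lra).
  destruct (Rcomplete.R_complete _ (Cauchy_crit_psum u1 b H1 Hc)) as [w1 Hw1].
  destruct (Rcomplete.R_complete _ (Cauchy_crit_psum u2 b H2 Hc)) as [w2 Hw2].
  exists w1, w2. do 2 (split; auto). intro N.
  apply le_epsilon. intros eps He.
  destruct (Hw1 (eps / 3) ltac:(lra)) as [N1 HN1], (Hw2 (eps / 3) ltac:(lra)) as [N2 HN2].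
  destruct (HB (eps / 3) ltac:(lra)) as [N3 HN3].
  set (M := (N + N1 + N2 + N3)%nat).
  specialize (HN1 M ltac:(unfold M; lia)). specialize (HN2 M ltac:(unfold M; lia)).
  specialize (HN3 M ltac:(unfold M; lia)). unfold R_dist in *.
  pose proof (psum_diff_le u1 u2 b N (M - N) H) as D.
  replace (N + (M - N))%nat with M in D by (unfold M; lia).
  pose proof (Rabs_triang (w1 - psum u1 M) (psum u1 M - psum u1 N)).
  pose proof (Rabs_triang (w2 - psum u2 M) (psum u2 M - psum u2 N)).
  replace (w1 - psum u1 M + (psum u1 M - psum u1 N)) with (w1 - psum u1 N) in * by ring.
  replace (w2 - psum u2 M + (psum u2 M - psum u2 N)) with (w2 - psum u2 N) in * by ring.
  rewrite Rabs_minus_sym in HN1, HN2. apply Rabs_def2 in HN3. lra.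
Qed.

Lemma Eexp_eq zeta p q z w : Eseries_sum zeta p q z w -> Eexp zeta p q z = w.
Proof.
  intro H. unfold Eexp.
  pose proof (epsilon_spec (inhabits (0, 0)) _ (ex_intro _ w H)) as S.
  destruct H as [H1 H2], S as [S1 S2].
  apply Cplx_eq; eapply UL_sequence; eauto.
Qed.

Lemma Eexp_cv zeta p q z : Econv zeta p q z ->
  Un_cv (fun N => fst (Epartial zeta p q z N)) (fst (Eexp zeta p q z)) /\
  Un_cv (fun N => snd (Epartial zeta p q z N)) (snd (Eexp zeta p q z)).
Proof. intros [w Hw]. rewrite (Eexp_eq _ _ _ _ _ Hw). exact Hw. Qed.

Lemma Epartial_fst zeta p q z N :
  fst (Epartial zeta p q z N) = psum (fun n => fst (Cmul (RtoC (Ecoef zeta p q n)) (Cpow z n))) N.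
Proof. induction N as [|N IH]; simpl; [|rewrite IH]; reflexivity. Qed.

Lemma Epartial_snd zeta p q z N :
  snd (Epartial zeta p q z N) = psum (fun n => snd (Cmul (RtoC (Ecoef zeta p q n)) (Cpow z n))) N.
Proof. induction N as [|N IH]; simpl; [|rewrite IH]; reflexivity. Qed.

Lemma Econv_tail_le zeta p q z (b : nat -> R) B :
  (forall n, Rabs (Ecoef zeta p q n) * Cnorm1 z ^ n <= b n) -> Un_cv (psum b) B ->
  Econv zeta p q z /\
  forall N, Rabs (fst (Eexp zeta p q z) - fst (Epartial zeta p q z N))
          + Rabs (snd (Eexp zeta p q z) - snd (Epartial zeta p q z N)) <= B - psum b N.
Proof.
  intros Hb HB.
  destruct (psum_tail_le (fun n => fst (Cmul (RtoC (Ecoef zeta p q n)) (Cpow z n)))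
                         (fun n => snd (Cmul (RtoC (Ecoef zeta p q n)) (Cpow z n))) b B)
    as [w1 [w2 [H1 [H2 H3]]]]; auto.
  { intro n. fold (Cnorm1 (Cmul (RtoC (Ecoef zeta p q n)) (Cpow z n))).
    eapply Rle_trans; [apply Cnorm1_Cmul_le|]. rewrite Cnorm1_RtoC.
    eapply Rle_trans; [|apply Hb]. apply Rmult_le_compat_l; [apply Rabs_pos | apply Cnorm1_Cpow_le]. }
  assert (ES : Eseries_sum zeta p q z (w1, w2)).
  { split; simpl; eapply Un_cv_ext; try eassumption; intro;
      [rewrite Epartial_fst | rewrite Epartial_snd]; reflexivity. }
  split; [exists (w1, w2); exact ES|].
  intro N. rewrite (Eexp_eq _ _ _ _ _ ES), Epartial_fst, Epartial_snd. apply H3.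
Qed.

Lemma exp_INR_mul a n : exp (INR n * a) = exp a ^ n.
Proof.
  induction n as [|n IH]; [simpl; rewrite Rmult_0_l; apply exp_0|].
  rewrite S_INR, Rmult_plus_distr_r, Rmult_1_l, exp_plus, IH. simpl; ring.
Qed.

Section PQBracket.

Variables p q : R.
Hypotheses (hp : 0 < p) (hq : 0 < q) (hpq : p * q < 1).

Lemma pqbr_S_mul n : (/ p ^ S n - q ^ S n) * p ^ S n = 1 - (p * q) ^ S n.
Proof. rewrite Rpow_mult_distr. field. apply pow_nonzero; lra. Qed.

Lemma pqbr_pos n : 0 < pqbr p q n.
Proof.
  induction n as [|n IH]; cbn [pqbr]; [lra|]. apply Rmult_lt_0_compat; auto.
  assert (H : (p * q) ^ S n < 1) by (apply pow_lt_1_compat; [split; nra | lia]).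
  assert (Hp : 0 < p ^ S n) by (apply pow_lt; auto).
  apply Rmult_lt_reg_r with (p ^ S n); [exact Hp|]. rewrite Rmult_0_l, pqbr_S_mul. lra.
Qed.

(* Each factor satisfies [p^l (p^{-l} - q^l) = 1 - (pq)^l >= 1 - pq], and [∑_{l ≤ n} l = (n² + n)/2]. *)
Lemma pqbr_ge n : (1 - p * q) ^ n <= pqbr p q n * sqrt p ^ (n * n + n).
Proof.
  induction n as [|n IH]; cbn [pqbr]; [simpl; lra|].
  replace (S n * S n + S n)%nat with ((n * n + n) + 2 * S n)%nat by lia.
  rewrite pow_add, pow_mult. replace (sqrt p ^ 2) with p by (simpl; rewrite Rmult_1_r, sqrt_sqrt; lra).
  assert (Hle : (p * q) ^ S n <= p * q).
  { assert ((p * q) ^ n <= 1) by (rewrite <- (pow1 n); apply pow_incr; split; nra).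
    assert (0 < p * q) by nra. change ((p * q) ^ S n) with (p * q * (p * q) ^ n). nra. }
  replace (pqbr p q n * (/ p ^ S n - q ^ S n) * (sqrt p ^ (n * n + n) * p ^ S n))
    with ((pqbr p q n * sqrt p ^ (n * n + n)) * ((/ p ^ S n - q ^ S n) * p ^ S n)) by ring.
  simpl pow at 1. rewrite Rmult_comm, pqbr_S_mul.
  apply Rmult_le_compat; [apply pow_le | | exact IH |]; lra.
Qed.

End PQBracket.

Lemma Ecoef_eq p k zeta n : 0 < p ->
  Ecoef zeta p (p * exp (- 2 * k ^ 2)) n = exp (- zeta * k ^ 2) ^ (n * n) / pqbr p (p * exp (- 2 * k ^ 2)) n.
Proof.
  intro hp. unfold Ecoef, Rpower.
  replace (p * exp (- 2 * k ^ 2) / p) with (exp (- 2 * k ^ 2)) by (field; lra).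
  rewrite ln_exp, <- exp_INR_mul, mult_INR.
  replace (zeta * INR n ^ 2 / 2 * (-2 * k ^ 2)) with (INR n * INR n * (- zeta * k ^ 2)) by field.
  reflexivity.
Qed.

Lemma psum_pow_sqr_cv (b : nat -> R) A rho : 0 <= A -> 0 < rho < 1 ->
  (forall n, 0 <= b n <= A ^ n * rho ^ (n * n)) -> exists B, Un_cv (psum b) B.
Proof.
  intros hA hr hb.
  assert (C : {l | Un_cv (sum_f_R0 (fun n => (A + 1) ^ n * rho ^ (n * n))) l}).
  { apply Alembert_C1; [intro; apply Rmult_lt_0_compat; apply pow_lt; lra|].
    intros eps He.
    destruct (pow_lt_1_zero rho ltac:(rewrite Rabs_right; lra) (eps / (A + 1))
                ltac:(apply Rdiv_lt_0_compat; lra)) as [N HN].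
    exists N. intros n Hn. unfold R_dist. rewrite Rminus_0_r, Rabs_Rabsolu.
    replace ((A + 1) ^ S n * rho ^ (S n * S n) / ((A + 1) ^ n * rho ^ (n * n)))
      with ((A + 1) * rho ^ S (2 * n)).
    2:{ replace (S n * S n)%nat with (n * n + S (2 * n))%nat by lia. rewrite pow_add. simpl.
        field. split; apply pow_nonzero; lra. }
    specialize (HN (S (2 * n)) ltac:(lia)).
    rewrite Rabs_mult, (Rabs_right (A + 1)) by lra.
    apply Rmult_lt_reg_l with (/ (A + 1)); [apply Rinv_0_lt_compat; lra|].
    rewrite <- Rmult_assoc, Rinv_l, Rmult_1_l by lra. unfold Rdiv in HN. lra. }
  assert (Hb : forall n, 0 <= b n <= (A + 1) ^ n * rho ^ (n * n)).
  { intro n. destruct (hb n) as [H0 H1]. split; [exact H0|].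
    eapply Rle_trans; [exact H1|]. apply Rmult_le_compat_r; [apply pow_le; lra|].
    apply pow_incr; lra. }
  destruct (Rseries_CV_comp b _ Hb C) as [B HB]. exists B. apply Un_cv_psum, HB.
Qed.

Section PQExponential.

Variables p k : R.
Hypotheses (hp : 0 < p) (hpq1 : p * (p * exp (- 2 * k ^ 2)) < 1).

Let q := p * exp (- 2 * k ^ 2).

Lemma q_pos : 0 < q.
Proof. unfold q; apply Rmult_lt_0_compat; [exact hp | apply exp_pos]. Qed.

Lemma Ecoef_pow_le zeta r n : 0 <= r ->
  Rabs (Ecoef zeta p q n) * r ^ n
    <= (sqrt p * r / (1 - p * q)) ^ n * (sqrt p * exp (- zeta * k ^ 2)) ^ (n * n).
Proof.
  intro hr. unfold q. rewrite Ecoef_eq by exact hp. fold q.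
  pose proof (pqbr_pos p q hp q_pos hpq1 n) as HP. pose proof (pqbr_ge p q hp q_pos hpq1 n) as HG.
  set (E := exp (- zeta * k ^ 2)). assert (HE : 0 < E) by apply exp_pos.
  set (s := sqrt p) in *. assert (Hs : 0 < s) by (apply sqrt_lt_R0; auto).
  assert (H1 : 0 < (1 - p * q) ^ n) by (apply pow_lt; unfold q; lra).
  assert (0 < E ^ (n * n)) by (apply pow_lt; auto).
  assert (0 <= r ^ n) by (apply pow_le; auto).
  rewrite Rabs_right by (left; apply Rdiv_lt_0_compat; auto).
  rewrite !Rpow_mult_distr. unfold Rdiv. rewrite !Rpow_mult_distr, pow_inv, pow_add in *.
  assert (I : / pqbr p q n <= s ^ (n * n) * s ^ n * / (1 - p * q) ^ n).
  { apply Rmult_le_reg_l with (pqbr p q n); auto. rewrite Rinv_r by lra.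
    apply Rmult_le_reg_r with ((1 - p * q) ^ n); auto.
    replace (pqbr p q n * (s ^ (n * n) * s ^ n * / (1 - p * q) ^ n) * (1 - p * q) ^ n)
      with (pqbr p q n * (s ^ (n * n) * s ^ n)) by (field; lra). lra. }
  replace (s ^ n * r ^ n * / (1 - p * q) ^ n * (s ^ (n * n) * E ^ (n * n)))
    with (E ^ (n * n) * (s ^ (n * n) * s ^ n * / (1 - p * q) ^ n) * r ^ n) by ring.
  apply Rmult_le_compat_r; auto. apply Rmult_le_compat_l; lra.
Qed.

Lemma Econv_of_lt zeta z : sqrt p * exp (- zeta * k ^ 2) < 1 -> Econv zeta p q z.
Proof.
  intro hr.
  assert (HA : 0 <= sqrt p * Cnorm1 z / (1 - p * q)).
  { apply Rmult_le_pos; [apply Rmult_le_pos; [apply sqrt_pos | apply Cnorm1_ge_0]|].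
    left; apply Rinv_0_lt_compat; unfold q; lra. }
  destruct (psum_pow_sqr_cv (fun n => Rabs (Ecoef zeta p q n) * Cnorm1 z ^ n) _
              (sqrt p * exp (- zeta * k ^ 2)) HA) as [B HB].
  - split; [apply Rmult_lt_0_compat; [apply sqrt_lt_R0; auto | apply exp_pos] | exact hr].
  - intro n. split; [apply Rmult_le_pos; [apply Rabs_pos | apply pow_le, Cnorm1_ge_0]|].
    apply Ecoef_pow_le, Cnorm1_ge_0.
  - apply (Econv_tail_le zeta p q z (fun n => Rabs (Ecoef zeta p q n) * Cnorm1 z ^ n) B);
      [intro; lra | exact HB].
Qed.

End PQExponential.

(** * Termwise integration *)

Definition fourier_gauss (x y : R) (w : Cplx) : Cplx :=
  Cmul (RtoC (/ sqrt (2 * PI))) (Cmul (Cexp (- y ^ 2 / 2, x * y)) w).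

Lemma is_improper_CInt_Epartial x zeta zeta' p q (z : R -> Cplx) w :
  (forall n, is_improper_CInt (fun y => fourier_gauss x y (Cmul (RtoC (Ecoef zeta p q n)) (Cpow (z y) n)))
               (Cmul (Cmul (RtoC (Ecoef zeta' p q n)) (Cpow w n)) (RtoC (exp (- x ^ 2 / 2))))) ->
  forall N, is_improper_CInt (fun y => fourier_gauss x y (Epartial zeta p q (z y) N))
              (Cmul (Epartial zeta' p q w N) (RtoC (exp (- x ^ 2 / 2)))).
Proof.
  intros H N. induction N as [|N IH]; eapply is_improper_CInt_ext.
  6: apply (is_improper_CInt_add _ _ _ _ IH (H N)).
  3: apply is_improper_CInt_zero.
  all: try intro y; unfold fourier_gauss; simpl Epartial; Cplx_ring.
Qed.

Lemma Ecoef_add p k zeta d n : 0 < p ->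
  Ecoef (zeta + d) p (p * exp (- 2 * k ^ 2)) n
    = exp (- d * (k * INR n) ^ 2) * Ecoef zeta p (p * exp (- 2 * k ^ 2)) n.
Proof.
  intro hp. rewrite !Ecoef_eq, <- !exp_INR_mul by exact hp. unfold Rdiv.
  rewrite mult_INR.
  replace (INR n * INR n * (- (zeta + d) * k ^ 2))
    with (- d * (k * INR n) ^ 2 + INR n * INR n * (- zeta * k ^ 2)) by ring.
  rewrite exp_plus. ring.
Qed.

Lemma sqrt_2PI_pos : 0 < sqrt (2 * PI).
Proof. apply sqrt_lt_R0; pose proof PI_RGT_0; lra. Qed.

Lemma Cexp_split a b : Cexp (a, b) = Cmul (RtoC (exp a)) (Cexp (0, b)).
Proof. apply Cplx_eq; unfold Cmul, RtoC, Cexp; simpl; rewrite exp_0; ring. Qed.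

Section Terms.

Variables p k zeta x : R.
Variable t : Cplx.
Hypothesis hp : 0 < p.

Let q := p * exp (- 2 * k ^ 2).

Lemma is_improper_CInt_term_a n :
  is_improper_CInt (fun y => fourier_gauss x y (Cmul (RtoC (Ecoef zeta p q n)) (Cpow (Cmul t (Cexp (0, k * y))) n)))
    (Cmul (Cmul (RtoC (Ecoef (zeta + 1/2) p q n)) (Cpow (Cmul t (RtoC (exp (- k * x)))) n))
          (RtoC (exp (- x ^ 2 / 2)))).
Proof.
  set (K := Cmul (RtoC (/ sqrt (2 * PI) * Ecoef zeta p q n)) (Cpow t n)).
  eapply is_improper_CInt_ext; [| | apply (is_improper_CInt_gauss_exp K 0 (x + k * INR n))].
  - intro y. unfold fourier_gauss, K. rewrite Cpow_Cmul, Cpow_Cexp.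
    replace (Cexp (- y ^ 2 / 2 + 0 * y, (x + k * INR n) * y))
      with (Cmul (Cexp (- y ^ 2 / 2, x * y)) (Cexp (INR n * 0, INR n * (k * y))))
      by (rewrite Cexp_add; apply f_equal, injective_projections; simpl; field).
    generalize (Cexp (- y ^ 2 / 2, x * y)) (Cexp (INR n * 0, INR n * (k * y))). intros. Cplx_ring.
  - unfold K. rewrite Cpow_Cmul, RtoC_exp, Cpow_Cexp, (Cexp_split (INR n * (- k * x))), Rmult_0_r.
    unfold q. rewrite Ecoef_add by exact hp. fold q. pose proof sqrt_2PI_pos.
    replace ((0 ^ 2 - (x + k * INR n) ^ 2) / 2)
      with (- (1 / 2) * (k * INR n) ^ 2 + INR n * (- k * x) + - x ^ 2 / 2) by field.
    rewrite Cexp_split, !exp_plus, Rmult_0_l.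
    apply Cplx_eq; unfold Cmul, RtoC, Cexp; simpl; field; lra.
Qed.

Lemma is_improper_CInt_term_b n :
  is_improper_CInt (fun y => fourier_gauss x y (Cmul (RtoC (Ecoef zeta p q n)) (Cpow (Cmul t (RtoC (exp (k * y)))) n)))
    (Cmul (Cmul (RtoC (Ecoef (zeta - 1/2) p q n)) (Cpow (Cmul t (Cexp (0, k * x))) n))
          (RtoC (exp (- x ^ 2 / 2)))).
Proof.
  set (K := Cmul (RtoC (/ sqrt (2 * PI) * Ecoef zeta p q n)) (Cpow t n)).
  eapply is_improper_CInt_ext; [| | apply (is_improper_CInt_gauss_exp K (k * INR n) x)].
  - intro y. unfold fourier_gauss, K. rewrite Cpow_Cmul, RtoC_exp, Cpow_Cexp.
    replace (Cexp (- y ^ 2 / 2 + k * INR n * y, x * y))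
      with (Cmul (Cexp (- y ^ 2 / 2, x * y)) (Cexp (INR n * (k * y), INR n * 0)))
      by (rewrite Cexp_add; apply f_equal, injective_projections; simpl; field).
    generalize (Cexp (- y ^ 2 / 2, x * y)) (Cexp (INR n * (k * y), INR n * 0)). intros. Cplx_ring.
  - unfold K. rewrite Cpow_Cmul, Cpow_Cexp, Rmult_0_r.
    replace (zeta - 1 / 2) with (zeta + - (1 / 2)) by ring.
    unfold q. rewrite Ecoef_add by exact hp. fold q. pose proof sqrt_2PI_pos.
    replace (((k * INR n) ^ 2 - x ^ 2) / 2) with (- - (1 / 2) * (k * INR n) ^ 2 + - x ^ 2 / 2) by field.
    replace (k * INR n * x) with (INR n * (k * x)) by ring.
    rewrite Cexp_split, exp_plus.
    apply Cplx_eq; unfold Cmul, RtoC, Cexp; simpl; field; lra.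
Qed.

End Terms.

Lemma Un_cv_const c : Un_cv (fun _ => c) c.
Proof. intros eps He. exists O. intros. unfold R_dist. rewrite Rminus_diag, Rabs_R0. exact He. Qed.

Lemma Un_cv_scal c u l : Un_cv u l -> Un_cv (fun n => c * u n) (c * l).
Proof. apply CV_mult, Un_cv_const. Qed.

Lemma fourier_gauss_sub_le x y w w' :
  Rabs (fst (fourier_gauss x y w) - fst (fourier_gauss x y w'))
    + Rabs (snd (fourier_gauss x y w) - snd (fourier_gauss x y w'))
  <= / sqrt (2 * PI) * (2 * gauss y) * (Rabs (fst w - fst w') + Rabs (snd w - snd w')).
Proof.
  pose proof sqrt_2PI_pos.
  assert (E : fourier_gauss x y (fst w - fst w', snd w - snd w')
              = (fst (fourier_gauss x y w) - fst (fourier_gauss x y w'),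
                 snd (fourier_gauss x y w) - snd (fourier_gauss x y w')))
    by (unfold fourier_gauss; Cplx_ring).
  change (Rabs (fst w - fst w') + Rabs (snd w - snd w')) with (Cnorm1 (fst w - fst w', snd w - snd w')).
  change (Rabs (fst (fourier_gauss x y w) - fst (fourier_gauss x y w'))
          + Rabs (snd (fourier_gauss x y w) - snd (fourier_gauss x y w')))
    with (Cnorm1 (fst (fourier_gauss x y w) - fst (fourier_gauss x y w'),
                  snd (fourier_gauss x y w) - snd (fourier_gauss x y w'))).
  rewrite <- E. unfold fourier_gauss.
  eapply Rle_trans; [apply Cnorm1_Cmul_le|].
  rewrite Cnorm1_RtoC, Rabs_right, Rmult_assoc by (left; apply Rinv_0_lt_compat; lra).
  apply Rmult_le_compat_l; [left; apply Rinv_0_lt_compat; lra|].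
  eapply Rle_trans; [apply Cnorm1_Cmul_le|].
  apply Rmult_le_compat_r; [apply Cnorm1_ge_0 | apply Cnorm1_Cexp_le].
Qed.

(* Dominated convergence for the termwise integration of the series. *)
Lemma is_improper_CInt_fourier_Eexp zeta p q x (z : R -> Cplx) (b : nat -> R) B (mu : R -> R) C
    (Ls : nat -> Cplx) L :
  Un_cv (psum b) B -> (forall n, 0 <= b n) -> (forall y, 0 <= mu y) ->
  (forall y n, Rabs (Ecoef zeta p q n) * Cnorm1 (z y) ^ n <= mu y * b n) ->
  (forall y, 2 * gauss y * mu y <= C * / (1 + y ^ 2)) ->
  (forall N, is_improper_CInt (fun y => fourier_gauss x y (Epartial zeta p q (z y) N)) (Ls N)) ->
  Un_cv (fun N => fst (Ls N)) (fst L) -> Un_cv (fun N => snd (Ls N)) (snd L) ->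
  (forall y, Econv zeta p q (z y)) /\
  is_improper_CInt (fun y => fourier_gauss x y (Eexp zeta p q (z y))) L.
Proof.
  intros HB Hb Hmu Hmaj Hw HI H1 H2.
  assert (HE : forall y, Econv zeta p q (z y) /\
    forall N, Rabs (fst (Eexp zeta p q (z y)) - fst (Epartial zeta p q (z y) N))
            + Rabs (snd (Eexp zeta p q (z y)) - snd (Epartial zeta p q (z y) N))
            <= mu y * B - psum (fun n => mu y * b n) N).
  { intro y. apply Econv_tail_le; [apply Hmaj|].
    eapply Un_cv_ext; [intro; symmetry; apply psum_scal | apply Un_cv_scal, HB]. }
  split; [intro y; apply HE|].
  pose proof sqrt_2PI_pos.
  apply (is_improper_CInt_approx _ _ Ls L (fun N => / sqrt (2 * PI) * C * (B - psum b N)) HI H1 H2).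
  - replace 0 with (/ sqrt (2 * PI) * C * (B - B)) by ring.
    apply Un_cv_scal, CV_minus; [apply Un_cv_const | exact HB].
  - intros N y. eapply Rle_trans; [apply fourier_gauss_sub_le|].
    destruct (HE y) as [_ HT]. specialize (HT N). rewrite psum_scal in HT.
    assert (HD : 0 <= B - psum b N) by (pose proof (psum_le_lim b B N Hb HB); lra).
    pose proof (Hw y). pose proof (Hmu y). pose proof (gauss_pos y).
    assert (Hs : 0 < / sqrt (2 * PI)) by (apply Rinv_0_lt_compat; lra).
    replace (/ sqrt (2 * PI) * C * (B - psum b N) * / (1 + y ^ 2))
      with (/ sqrt (2 * PI) * ((C * / (1 + y ^ 2)) * (B - psum b N))) by ring.
    rewrite Rmult_assoc. apply Rmult_le_compat_l; [lra|].
    apply Rle_trans with (2 * gauss y * mu y * (B - psum b N)); [|apply Rmult_le_compat_r; lra].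
    replace (2 * gauss y * mu y * (B - psum b N)) with (2 * gauss y * (mu y * B - mu y * psum b N)) by ring.
    apply Rmult_le_compat_l; lra.
Qed.

Lemma Epartial_mul_cv zeta p q w c : Econv zeta p q w ->
  Un_cv (fun N => fst (Cmul (Epartial zeta p q w N) (RtoC c))) (fst (Cmul (Eexp zeta p q w) (RtoC c))) /\
  Un_cv (fun N => snd (Cmul (Epartial zeta p q w N) (RtoC c))) (snd (Cmul (Eexp zeta p q w) (RtoC c))).
Proof.
  intro H. destruct (Eexp_cv _ _ _ _ H) as [H1 H2]. unfold Cmul, RtoC; simpl.
  replace (fst (Eexp zeta p q w) * c - snd (Eexp zeta p q w) * 0) with (c * fst (Eexp zeta p q w)) by ring.
  replace (fst (Eexp zeta p q w) * 0 + snd (Eexp zeta p q w) * c) with (c * snd (Eexp zeta p q w)) by ring.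
  split; (eapply Un_cv_ext; [| apply Un_cv_scal; eassumption]); intro; simpl; ring.
Qed.

Lemma exp_neg_mul_sqr_le d y : 0 < d -> exp (- d * y ^ 2) <= (1 + / d) * / (1 + y ^ 2).
Proof.
  intro Hd. pose proof (exp_ineq1_le (d * y ^ 2)). pose proof (pow2_ge_0 y).
  pose proof (one_plus_sqr_pos y). assert (0 < / d) by (apply Rinv_0_lt_compat; auto).
  assert (0 <= d * y ^ 2) by (apply Rmult_le_pos; lra).
  replace (- d * y ^ 2) with (- (d * y ^ 2)) by ring. rewrite exp_Ropp.
  apply Rle_trans with (/ (1 + d * y ^ 2)); [apply Rinv_le_contravar; lra|].
  apply Rmult_le_reg_l with ((1 + d * y ^ 2) * (1 + y ^ 2)); [nra|].
  replace ((1 + d * y ^ 2) * (1 + y ^ 2) * / (1 + d * y ^ 2)) with (1 + y ^ 2) by (field; lra).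
  replace ((1 + d * y ^ 2) * (1 + y ^ 2) * ((1 + / d) * / (1 + y ^ 2)))
    with ((1 + d * y ^ 2) * (1 + / d)) by (field; lra).
  replace ((1 + d * y ^ 2) * (1 + / d)) with (1 + / d + d * y ^ 2 + y ^ 2) by (field; lra). nra.
Qed.

Lemma sqrt_mul_exp_lt_1 p a : 0 < p -> p * exp (2 * a) < 1 -> 0 < sqrt p * exp a < 1.
Proof.
  intros hp H. assert (Hs : 0 < sqrt p) by (apply sqrt_lt_R0; auto).
  assert (Hsq : (sqrt p * exp a) * (sqrt p * exp a) = p * exp (2 * a)).
  { replace (2 * a) with (a + a) by ring. rewrite exp_plus.
    transitivity (sqrt p * sqrt p * (exp a * exp a)); [ring | rewrite sqrt_sqrt; lra]. }
  assert (0 < sqrt p * exp a) by (apply Rmult_lt_0_compat; [exact Hs | apply exp_pos]). nra.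
Qed.

Lemma mul_le_sqr_div lam u v : 0 < lam -> u * v <= u ^ 2 / (4 * lam) + lam * v ^ 2.
Proof.
  intro Hl. assert (E : u ^ 2 / (4 * lam) + lam * v ^ 2 - u * v = (u - 2 * lam * v) ^ 2 / (4 * lam))
    by (field; lra).
  assert (0 <= (u - 2 * lam * v) ^ 2 / (4 * lam))
    by (apply Rmult_le_pos; [apply pow2_ge_0 | left; apply Rinv_0_lt_compat; lra]).
  lra.
Qed.

(* Witness [λ = 1/2 + ln r / c] with [r = (1 + m) / (2 m)], so that [m r = (1 + m) / 2]. *)
Lemma exists_exponent_gt_half m c : 0 < m < 1 -> 0 < c ->
  exists lam, 1 / 2 < lam /\ m * exp ((lam - 1 / 2) * c) < 1.
Proof.
  intros hm hc. set (r := (1 + m) / (2 * m)).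
  assert (hr : 1 < r) by (unfold r; apply Rmult_lt_reg_r with (2 * m); [lra|];
    unfold Rdiv; rewrite Rmult_assoc, Rinv_l; lra).
  assert (hlnr : 0 < ln r) by (rewrite <- ln_1; apply ln_increasing; lra).
  exists (1 / 2 + ln r / c). split; [assert (0 < ln r / c) by (apply Rdiv_lt_0_compat; auto); lra|].
  replace ((1 / 2 + ln r / c - 1 / 2) * c) with (ln r) by (field; lra).
  rewrite exp_ln by lra. unfold r. apply Rmult_lt_reg_r with 2; [lra|].
  replace (m * ((1 + m) / (2 * m)) * 2) with (1 + m) by (field; lra). lra.
Qed.

Lemma Cnorm1_mul_exp_pow_le t k y lam n : 0 < lam ->
  Cnorm1 (Cmul t (RtoC (exp (k * y)))) ^ n
    <= exp (y ^ 2 / (4 * lam)) * (Cnorm1 t ^ n * exp (lam * k ^ 2) ^ (n * n)).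
Proof.
  intro hlam. pose proof (Cnorm1_ge_0 t).
  apply Rle_trans with (Cnorm1 t ^ n * exp (k * y) ^ n).
  { rewrite <- Rpow_mult_distr. apply pow_incr. split; [apply Cnorm1_ge_0|].
    eapply Rle_trans; [apply Cnorm1_Cmul_le|]. rewrite Cnorm1_RtoC, Rabs_right by (left; apply exp_pos).
    lra. }
  rewrite (Rmult_comm (exp _)), Rmult_assoc. apply Rmult_le_compat_l; [apply pow_le; lra|].
  rewrite <- !exp_INR_mul, <- exp_plus, mult_INR. apply exp_le_compat.
  pose proof (mul_le_sqr_div lam y (k * INR n) hlam). nra.
Qed.

Lemma gauss_mul_exp_le lam y : 1 / 2 < lam ->
  2 * gauss y * exp (y ^ 2 / (4 * lam)) <= 2 * (1 + / (1 / 2 - / (4 * lam))) * / (1 + y ^ 2).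
Proof.
  intro hlam. set (delta := 1 / 2 - / (4 * lam)).
  assert (hdelta : 0 < delta).
  { unfold delta. assert (/ (4 * lam) < / 2) by (apply Rinv_lt_contravar; lra). lra. }
  pose proof (exp_neg_mul_sqr_le delta y hdelta).
  replace (2 * gauss y * exp (y ^ 2 / (4 * lam))) with (2 * exp (- delta * y ^ 2))
    by (unfold gauss; rewrite Rmult_assoc, <- exp_plus; unfold delta; f_equal; f_equal; field; lra).
  lra.
Qed.

Section FourierGaussEexp.

Variables p k zeta : R.
Variable t : Cplx.
Variable x : R.
Hypotheses (hp : 0 < p) (hk : 0 < k) (hpq1 : p * (p * exp (- 2 * k ^ 2)) < 1).

Let q := p * exp (- 2 * k ^ 2).

Lemma one_sub_pq_pos : 0 < 1 - p * q.
Proof. unfold q; lra. Qed.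

Lemma fourier_gauss_Eexp_a : p * exp (- 2 * zeta * k ^ 2) < 1 ->
  Econv (zeta + 1/2) p q (Cmul t (RtoC (exp (- k * x)))) /\
  (forall y, Econv zeta p q (Cmul t (Cexp (0, k * y)))) /\
  improper_integral (fun y => fourier_gauss x y (Eexp zeta p q (Cmul t (Cexp (0, k * y)))))
    (Cmul (Eexp (zeta + 1/2) p q (Cmul t (RtoC (exp (- k * x))))) (RtoC (exp (- x ^ 2 / 2)))).
Proof.
  intro ha. set (rho := sqrt p * exp (- zeta * k ^ 2)).
  assert (hrho : 0 < rho < 1)
    by (apply sqrt_mul_exp_lt_1; [exact hp | replace (2 * (- zeta * k ^ 2)) with (- 2 * zeta * k ^ 2) by ring; exact ha]).
  assert (Hw : Econv (zeta + 1/2) p q (Cmul t (RtoC (exp (- k * x))))).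
  { apply Econv_of_lt; auto. apply Rle_lt_trans with rho; [|lra].
    apply Rmult_le_compat_l; [apply sqrt_pos|]. apply exp_le_compat. pose proof (pow2_ge_0 k). nra. }
  pose proof (Cnorm1_ge_0 t). pose proof one_sub_pq_pos.
  destruct (psum_pow_sqr_cv (fun n => Rabs (Ecoef zeta p q n) * (2 * Cnorm1 t) ^ n)
              (sqrt p * (2 * Cnorm1 t) / (1 - p * q)) rho) as [B HB]; auto.
  { apply Rmult_le_pos; [apply Rmult_le_pos; [apply sqrt_pos | lra] | left; apply Rinv_0_lt_compat; lra]. }
  { intro n. split; [apply Rmult_le_pos; [apply Rabs_pos | apply pow_le; lra]|].
    apply Ecoef_pow_le; auto; lra. }
  destruct (Epartial_mul_cv (zeta + 1/2) p q _ (exp (- x ^ 2 / 2)) Hw) as [L1 L2].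
  assert (Hb : forall n, 0 <= Rabs (Ecoef zeta p q n) * (2 * Cnorm1 t) ^ n)
    by (intro n; apply Rmult_le_pos; [apply Rabs_pos | apply pow_le; lra]).
  assert (Hmaj : forall y n, Rabs (Ecoef zeta p q n) * Cnorm1 (Cmul t (Cexp (0, k * y))) ^ n
                             <= 1 * (Rabs (Ecoef zeta p q n) * (2 * Cnorm1 t) ^ n)).
  { intros y n. rewrite Rmult_1_l. apply Rmult_le_compat_l; [apply Rabs_pos|].
    apply pow_incr. split; [apply Cnorm1_ge_0|].
    eapply Rle_trans; [apply Cnorm1_Cmul_le|].
    rewrite Rmult_comm. apply Rmult_le_compat_r; [lra|].
    eapply Rle_trans; [apply Cnorm1_Cexp_le | rewrite exp_0; lra]. }
  assert (Hdecay : forall y, 2 * gauss y * 1 <= 6 * / (1 + y ^ 2)).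
  { intro y. pose proof (exp_neg_mul_sqr_le (1 / 2) y ltac:(lra)) as Hg.
    unfold gauss. replace (- y ^ 2 / 2) with (- (1 / 2) * y ^ 2) by field.
    replace (1 + / (1 / 2)) with 3 in Hg by field. lra. }
  destruct (is_improper_CInt_fourier_Eexp zeta p q x _ _ B (fun _ => 1) 6 _ _ HB Hb
              ltac:(intro; lra) Hmaj Hdecay
              (is_improper_CInt_Epartial _ _ _ _ _ _ _ (is_improper_CInt_term_a p k zeta x t hp))
              L1 L2) as [HE HC].
  split; [exact Hw | split; [exact HE | apply is_improper_CInt_improper_integral, HC]].
Qed.

Lemma fourier_gauss_Eexp_b : p * exp (- (2 * zeta - 1) * k ^ 2) < 1 ->
  Econv (zeta - 1/2) p q (Cmul t (Cexp (0, k * x))) /\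
  (forall y, Econv zeta p q (Cmul t (RtoC (exp (k * y))))) /\
  improper_integral (fun y => fourier_gauss x y (Eexp zeta p q (Cmul t (RtoC (exp (k * y))))))
    (Cmul (Eexp (zeta - 1/2) p q (Cmul t (Cexp (0, k * x)))) (RtoC (exp (- x ^ 2 / 2)))).
Proof.
  intro hb. set (m := sqrt p * exp (- zeta * k ^ 2 + k ^ 2 / 2)).
  assert (hm : 0 < m < 1).
  { apply sqrt_mul_exp_lt_1; [exact hp|].
    replace (2 * (- zeta * k ^ 2 + k ^ 2 / 2)) with (- (2 * zeta - 1) * k ^ 2) by field. exact hb. }
  assert (Hw : Econv (zeta - 1/2) p q (Cmul t (Cexp (0, k * x)))).
  { apply Econv_of_lt; auto. replace (- (zeta - 1 / 2) * k ^ 2) with (- zeta * k ^ 2 + k ^ 2 / 2) by field.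
    apply hm. }
  destruct (exists_exponent_gt_half m (k ^ 2) hm (pow_lt k 2 hk)) as [lam [hlam hrho]].
  replace (m * exp ((lam - 1 / 2) * k ^ 2)) with (sqrt p * exp (- zeta * k ^ 2) * exp (lam * k ^ 2)) in hrho
    by (unfold m; rewrite !Rmult_assoc, <- !exp_plus; f_equal; f_equal; field).
  pose proof (Cnorm1_ge_0 t). pose proof one_sub_pq_pos.
  set (b n := Rabs (Ecoef zeta p q n) * (Cnorm1 t ^ n * exp (lam * k ^ 2) ^ (n * n))).
  assert (Hb : forall n, 0 <= b n).
  { intro n. apply Rmult_le_pos; [apply Rabs_pos | apply Rmult_le_pos; [apply pow_le; lra|]].
    left; apply pow_lt, exp_pos. }
  destruct (psum_pow_sqr_cv b (sqrt p * Cnorm1 t / (1 - p * q))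
              (sqrt p * exp (- zeta * k ^ 2) * exp (lam * k ^ 2))) as [B HB].
  { apply Rmult_le_pos; [apply Rmult_le_pos; [apply sqrt_pos | lra] | left; apply Rinv_0_lt_compat; lra]. }
  { split; [|exact hrho]. apply Rmult_lt_0_compat; [|apply exp_pos].
    apply Rmult_lt_0_compat; [apply sqrt_lt_R0; exact hp | apply exp_pos]. }
  { intro n. split; [apply Hb|]. unfold b. rewrite (Rpow_mult_distr _ (exp (lam * k ^ 2))).
    rewrite <- Rmult_assoc, <- Rmult_assoc.
    apply Rmult_le_compat_r; [left; apply pow_lt, exp_pos|].
    apply Ecoef_pow_le; auto. }
  destruct (Epartial_mul_cv (zeta - 1/2) p q _ (exp (- x ^ 2 / 2)) Hw) as [L1 L2].
  assert (Hmaj : forall y n, Rabs (Ecoef zeta p q n) * Cnorm1 (Cmul t (RtoC (exp (k * y)))) ^ n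
                             <= exp (y ^ 2 / (4 * lam)) * b n).
  { intros y n. unfold b.
    replace (exp (y ^ 2 / (4 * lam)) * (Rabs (Ecoef zeta p q n) * (Cnorm1 t ^ n * exp (lam * k ^ 2) ^ (n * n))))
      with (Rabs (Ecoef zeta p q n) * (exp (y ^ 2 / (4 * lam)) * (Cnorm1 t ^ n * exp (lam * k ^ 2) ^ (n * n))))
      by ring.
    apply Rmult_le_compat_l; [apply Rabs_pos | apply Cnorm1_mul_exp_pow_le; lra]. }
  destruct (is_improper_CInt_fourier_Eexp zeta p q x _ b B (fun y => exp (y ^ 2 / (4 * lam))) _ _ _ HB Hb
              ltac:(intro; left; apply exp_pos) Hmaj (fun y => gauss_mul_exp_le lam y hlam)
              (is_improper_CInt_Epartial _ _ _ _ _ _ _ (is_improper_CInt_term_b p k zeta x t hp))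
              L1 L2) as [HE HC].
  split; [exact Hw | split; [exact HE | apply is_improper_CInt_improper_integral, HC]].
Qed.

End FourierGaussEexp.

Theorem mainTheorem6 (p k q zeta : R) (t : Cplx) (x : R)
  (hp : 0 < p) (hk : 0 < k) (hq : q = p * exp (- 2 * k ^ 2))
  (hpq0 : 0 < p * q) (hpq1 : p * q < 1) :
  (* (a) *)
  (p * exp (- 2 * zeta * k ^ 2) < 1 ->
     Econv (zeta + 1/2) p q (Cmul t (RtoC (exp (- k * x)))) /\
     (forall y, Econv zeta p q (Cmul t (Cexp (0, k * y)))) /\
     improper_integral
       (fun y => Cmul (RtoC (/ sqrt (2 * PI)))
                   (Cmul (Cexp (- y ^ 2 / 2, x * y))
                         (Eexp zeta p q (Cmul t (Cexp (0, k * y))))))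
       (Cmul (Eexp (zeta + 1/2) p q (Cmul t (RtoC (exp (- k * x)))))
             (RtoC (exp (- x ^ 2 / 2))))) /\
  (* (b) *)
  (p * exp (- (2 * zeta - 1) * k ^ 2) < 1 ->
     Econv (zeta - 1/2) p q (Cmul t (Cexp (0, k * x))) /\
     (forall y, Econv zeta p q (Cmul t (RtoC (exp (k * y))))) /\
     improper_integral
       (fun y => Cmul (RtoC (/ sqrt (2 * PI)))
                   (Cmul (Cexp (- y ^ 2 / 2, x * y))
                         (Eexp zeta p q (Cmul t (RtoC (exp (k * y)))))))
       (Cmul (Eexp (zeta - 1/2) p q (Cmul t (Cexp (0, k * x))))
             (RtoC (exp (- x ^ 2 / 2))))).
Proof.
  subst q. split.
  - exact (fourier_gauss_Eexp_a p k zeta t x hp hpq1).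
  - exact (fourier_gauss_Eexp_b p k zeta t x hp hk hpq1).
Qed.
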